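(* Let $K_i(v)=K_{0i}e^{-v^2/(2\sigma_{K_i}^2)}$ ($i=1,2$) and $a(v_1,v_2)=a_0e^{-(v_1-v_2)^2/(2\sigma_a^2)}$ with all constants positive, and consider $$\begin{aligned}\dot x_1&=x_1\Big[r_1\Big(1-\frac{x_1}{K_1(u_1)}\Big)-\frac{a(u_1,u_2)x_2}{1+ha(u_1,u_2)x_1}\Big],\\ \dot x_2&=x_2\Big[\frac{ea(u_1,u_2)x_1}{1+ha(u_1,u_2)x_1}-d+r_2\Big(1-\frac{x_2}{K_2(u_2)}\Big)\Big],\\ \dot u_1&=\sigma_1^2\Big[-\frac{r_1x_1u_1}{\sigma_{K_1}^2K_1(u_1)}+\frac{(u_1-u_2)x_2a(u_1,u_2)}{\sigma_a^2(1+ha(u_1,u_2)x_1)^2}\Big],\\ \dot u_2&=\sigma_2^2\Big[-\frac{r_2x_2u_2}{\sigma_{K_2}^2K_2(u_2)}+\frac{e(u_1-u_2)x_1a(u_1,u_2)}{\sigma_a^2(1+ha(u_1,u_2)x_1)^2}\Big],\end{aligned}$$ with $r_1,r_2,h,e,\sigma_1,\sigma_2>0$, $d\ge0$. (i) If $r_2+\frac{ea_0K_{01}}{1+a_0hK_{01}}<d$, then the strategy $(0,0)$ of the boundary equilibrium $(K_{01},0,0,0)$ is the unique ESS of the system. (ii) Assume $\sigma_{K_2}>\sigma_{K_1}$, and let $(x_1^*,x_2^*,0,0)$ with $x_1^*,x_2^*>0$ be an equilibrium of the system. If $K_{02}a_0<\frac{r_1}{1-\frac{d}{r_2}}$, $K_{01}a_0<\frac{1}{h}$,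 $\min\{\frac{2r_2}{K_{02}},\frac{r_1}{\sigma_{K_1}^2K_{01}}\}>a_0$, $\frac{r_1r_2}{K_{01}K_{02}}+\frac{ea_0^2}{(1+a_0hK_{01})^3}>a_0^2hK_{02}(r_2+\frac{e}{h})$, $\frac{\sigma_{K_2}}{\sigma_{K_1}}\sqrt{\frac{r_1eK_{02}}{r_2K_{01}}}>\frac{x_2^*}{x_1^*}$ and $\frac{\sigma_a^2}{\sigma_{K_1}\sigma_{K_2}}>\sqrt{\frac{eK_{01}K_{02}}{r_1r_2}}\,a_0$, then the strategy $(0,0)$ of $(x_1^*,x_2^*,0,0)$ is the unique ESS of the system.
   Context: Fitness functions: $G_1(v_1,u,x)=r_1(1-\frac{x_1}{K_1(v_1)})-\frac{a(v_1,u_2)x_2}{1+ha(v_1,u_2)x_1}$ and $G_2(v_2,u,x)=\frac{ea(u_1,v_2)x_1}{1+ha(u_1,v_2)x_1}-d+r_2(1-\frac{x_2}{K_2(v_2)})$. For an equilibrium $(x^*,u^* )$ of the system, $u^*$ is an evolutionary stable strategy (ESS) if $(x^*,u^* )$ is locally asymptotically stable for the four-dimensional system and, for $i=1,2$, $\max_{v_i\in\mathbb R}G_i(v_i,u^*,x^* )=G_i(u_i^*,u^*,x^* )=0$ when $x_1^*,x_2^*>0$, respectively $\max_{v_i\in\mathbb R}G_i(v_i,u^*,x^* )=G_i(u_i^*,u^*,x^* )\le0$ when $x_1^*x_2^*=0$. ''Unique ESS'' means that it is an ESS and no other equilibrium of the system has an ESS strategy. *)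

From Stdlib Require Import Reals Lra.
Open Scope R_scope.

Record params := mkParams {
  K01 : R; K02 : R; sK1 : R; sK2 : R; a0 : R; sa : R;
  r1 : R; r2 : R; h : R; e : R; d : R; s1 : R; s2 : R }.

Record state := mkState { sx1 : R; sx2 : R; su1 : R; su2 : R }.

Definition K1 (p : params) (v : R) : R := K01 p * exp (- (v ^ 2) / (2 * sK1 p ^ 2)).
Definition K2 (p : params) (v : R) : R := K02 p * exp (- (v ^ 2) / (2 * sK2 p ^ 2)).
Definition aa (p : params) (v1 v2 : R) : R :=
  a0 p * exp (- ((v1 - v2) ^ 2) / (2 * sa p ^ 2)).

Definition G1 (p : params) (v1 : R) (s : state) : R :=
  r1 p * (1 - sx1 s / K1 p v1)
  - aa p v1 (su2 s) * sx2 s / (1 + h p * aa p v1 (su2 s) * sx1 s).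
Definition G2 (p : params) (v2 : R) (s : state) : R :=
  e p * aa p (su1 s) v2 * sx1 s / (1 + h p * aa p (su1 s) v2 * sx1 s)
  - d p + r2 p * (1 - sx2 s / K2 p v2).

Definition F (p : params) (s : state) : state :=
  let x1 := sx1 s in let x2 := sx2 s in let u1 := su1 s in let u2 := su2 s in
  let A := aa p u1 u2 in
  mkState
    (x1 * (r1 p * (1 - x1 / K1 p u1) - A * x2 / (1 + h p * A * x1)))
    (x2 * (e p * A * x1 / (1 + h p * A * x1) - d p + r2 p * (1 - x2 / K2 p u2)))
    (s1 p ^ 2 * (- (r1 p * x1 * u1) / (sK1 p ^ 2 * K1 p u1)
                 + (u1 - u2) * x2 * A / (sa p ^ 2 * (1 + h p * A * x1) ^ 2)))
    (s2 p ^ 2 * (- (r2 p * x2 * u2) / (sK2 p ^ 2 * K2 p u2)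
                 + e p * (u1 - u2) * x1 * A / (sa p ^ 2 * (1 + h p * A * x1) ^ 2))).

Definition dist4 (s t : state) : R :=
  sqrt ((sx1 s - sx1 t) ^ 2 + (sx2 s - sx2 t) ^ 2
        + (su1 s - su1 t) ^ 2 + (su2 s - su2 t) ^ 2).

Definition equilibrium (p : params) (s : state) : Prop :=
  F p s = mkState 0 0 0 0.

Definition sol_on (p : params) (T : R) (phi : R -> state) : Prop :=
  0 < T /\
  (forall t, 0 < t < T ->
     derivable_pt_lim (fun s => sx1 (phi s)) t (sx1 (F p (phi t))) /\
     derivable_pt_lim (fun s => sx2 (phi s)) t (sx2 (F p (phi t))) /\
     derivable_pt_lim (fun s => su1 (phi s)) t (su1 (F p (phi t))) /\
     derivable_pt_lim (fun s => su2 (phi s)) t (su2 (F p (phi t)))) /\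
  (forall eps, 0 < eps -> exists del, 0 < del /\
     forall t, 0 <= t < del -> dist4 (phi t) (phi 0) < eps).

Definition loc_asym_stable (p : params) (s : state) : Prop :=
  (forall eps, 0 < eps -> exists del, 0 < del /\
     forall T phi, sol_on p T phi -> dist4 (phi 0) s < del ->
       forall t, 0 <= t < T -> dist4 (phi t) s < eps) /\
  (exists del, 0 < del /\
     forall phi, (forall T, 0 < T -> sol_on p T phi) -> dist4 (phi 0) s < del ->
       forall eps, 0 < eps -> exists T0, forall t, T0 <= t -> dist4 (phi t) s < eps).

Definition isESS (p : params) (s : state) : Prop :=
  0 <= sx1 s /\ 0 <= sx2 s /\
  equilibrium p s /\ loc_asym_stable p s /\
  (0 < sx1 s /\ 0 < sx2 s ->
     ((forall v, G1 p v s <= G1 p (su1 s) s) /\ G1 p (su1 s) s = 0) /\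
     ((forall v, G2 p v s <= G2 p (su2 s) s) /\ G2 p (su2 s) s = 0)) /\
  (sx1 s * sx2 s = 0 ->
     ((forall v, G1 p v s <= G1 p (su1 s) s) /\ G1 p (su1 s) s <= 0) /\
     ((forall v, G2 p v s <= G2 p (su2 s) s) /\ G2 p (su2 s) s <= 0)).

Definition unique_ESS (p : params) (s : state) : Prop :=
  isESS p s /\ forall s', isESS p s' -> s' = s.

(* Stability is proved by Lyapunov's direct method. Near an equilibrium with zero
   strategies the vector field agrees up to second order with a block-diagonal linear map
   (a first-order Taylor calculus for [O(|z - c|^2)] remainders; the Gaussian factors only
   contribute at order two). Each 2x2 block has a negative diagonal and off-diagonal entries
   of opposite or zero sign, so a weighted sum of squares decreases along solutions.

   The ESS conditions follow from [K1 v <= K01], [a(v1, v2) <= a0], monotonicity of the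
   Holling response and, at the coexistence equilibrium, the curvature condition.

   For uniqueness, any other ESS is excluded case by case: without prey the predator
   cannot persist or the prey could invade; without predator the equilibrium is the
   prey-only state; with both species present the strategy equations force both strategies
   to [0], since otherwise the prey strategy mirrored about [u2] would do better, and then
   the prey isocline decreases while the predator isocline increases. *)

From Stdlib Require Import Reals Lra Psatz Classical.
Open Scope R_scope.

(** * Distances and asymptotic bounds near a state *)

Definition sqdist (z c : state) : R :=
  (sx1 z - sx1 c) ^ 2 + (sx2 z - sx2 c) ^ 2 + (su1 z - su1 c) ^ 2 + (su2 z - su2 c) ^ 2.

Lemma sqdist_ge0 z c : 0 <= sqdist z c.
Proof.
  unfold sqdist.
  pose proof (pow2_ge_0 (sx1 z - sx1 c)); pose proof (pow2_ge_0 (sx2 z - sx2 c)).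
  pose proof (pow2_ge_0 (su1 z - su1 c)); pose proof (pow2_ge_0 (su2 z - su2 c)).
  lra.
Qed.

Lemma dist4_ge0 z c : 0 <= dist4 z c.
Proof. apply sqrt_pos. Qed.

Lemma dist4_pow2 z c : dist4 z c ^ 2 = sqdist z c.
Proof. apply pow2_sqrt, sqdist_ge0. Qed.

Lemma dist4_lt_iff z c r : 0 < r -> dist4 z c < r <-> sqdist z c < r ^ 2.
Proof.
  intros Hr. rewrite <- dist4_pow2. pose proof (dist4_ge0 z c). split; intros Hd.
  - nra.
  - destruct (Rlt_or_le (dist4 z c) r) as [|Hle]; [easy|nra].
Qed.

Lemma Rabs_le_sqrt a s : a ^ 2 <= s -> Rabs a <= sqrt s.
Proof.
  intros H. rewrite <- sqrt_Rsqr_abs. apply sqrt_le_1_alt. unfold Rsqr. lra.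
Qed.

Lemma dist4_coords z c :
  Rabs (sx1 z - sx1 c) <= dist4 z c /\ Rabs (sx2 z - sx2 c) <= dist4 z c /\
  Rabs (su1 z - su1 c) <= dist4 z c /\ Rabs (su2 z - su2 c) <= dist4 z c.
Proof.
  pose proof (pow2_ge_0 (sx1 z - sx1 c)); pose proof (pow2_ge_0 (sx2 z - sx2 c)).
  pose proof (pow2_ge_0 (su1 z - su1 c)); pose proof (pow2_ge_0 (su2 z - su2 c)).
  unfold dist4; repeat split; apply Rabs_le_sqrt; lra.
Qed.

Definition near (c : state) (P : state -> Prop) : Prop :=
  exists r, 0 < r /\ forall z, dist4 z c < r -> P z.

Lemma near_ball c r : 0 < r -> near c (fun z => dist4 z c < r).
Proof. now exists r. Qed.

Lemma near_and c (P Q : state -> Prop) : near c P -> near c Q -> near c (fun z => P z /\ Q z).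
Proof.
  intros [r1 [Hr1 HP]] [r2 [Hr2 HQ]]. exists (Rmin r1 r2). split.
  - now apply Rmin_glb_lt.
  - intros z Hz. split; [apply HP|apply HQ];
      eapply Rlt_le_trans; eauto; [apply Rmin_l|apply Rmin_r].
Qed.

Lemma near_impl c (P Q : state -> Prop) : near c P -> (forall z, P z -> Q z) -> near c Q.
Proof. intros [r [Hr HP]] H. exists r. auto. Qed.

Definition bigO (c : state) (k : nat) (f : state -> R) : Prop :=
  exists M, near c (fun z => Rabs (f z) <= M * dist4 z c ^ k).

Lemma bigO_ext_near c k f g :
  near c (fun z => f z = g z) -> bigO c k g -> bigO c k f.
Proof.
  intros Hfg [M HM]. exists M.
  apply (near_impl c _ _ (near_and c _ _ Hfg HM)). intros z [E H]. now rewrite E.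
Qed.

Lemma bigO_ext c k f g : (forall z, f z = g z) -> bigO c k g -> bigO c k f.
Proof. intros H. apply bigO_ext_near. now exists 1; split; [lra|]. Qed.

Lemma bigO_pos c k f :
  bigO c k f -> exists M, 0 < M /\ near c (fun z => Rabs (f z) <= M * dist4 z c ^ k).
Proof.
  intros [M HM]. exists (Rabs M + 1). split; [pose proof (Rabs_pos M); lra|].
  apply (near_impl c _ _ HM). intros z H.
  pose proof (pow_le _ k (dist4_ge0 z c)). pose proof (Rle_abs M). nra.
Qed.

Lemma bigO_0 c k : bigO c k (fun _ => 0).
Proof.
  exists 0. exists 1. split; [lra|]. intros z _. rewrite Rabs_R0. lra.
Qed.

Lemma bigO_const c a : bigO c 0 (fun _ => a).
Proof. exists (Rabs a). exists 1. split; [lra|]. intros z _. simpl. lra. Qed.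

Lemma bigO_add c k f g : bigO c k f -> bigO c k g -> bigO c k (fun z => f z + g z).
Proof.
  intros [M1 H1] [M2 H2]. exists (M1 + M2).
  apply (near_impl c _ _ (near_and c _ _ H1 H2)); intros z [A B]; cbv beta in *.
  pose proof (Rabs_triang (f z) (g z)). lra.
Qed.

Lemma bigO_opp c k f : bigO c k f -> bigO c k (fun z => - f z).
Proof.
  intros [M H]. exists M. apply (near_impl c _ _ H). intros z A. now rewrite Rabs_Ropp.
Qed.

Lemma bigO_sub c k f g : bigO c k f -> bigO c k g -> bigO c k (fun z => f z - g z).
Proof. intros Hf Hg. now apply bigO_add, bigO_opp. Qed.

Lemma bigO_mul c j k f g : bigO c j f -> bigO c k g -> bigO c (j + k) (fun z => f z * g z).
Proof.
  intros Hf Hg.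
  destruct (bigO_pos _ _ _ Hf) as [M1 [HM1 N1]], (bigO_pos _ _ _ Hg) as [M2 [HM2 N2]].
  exists (M1 * M2). apply (near_impl c _ _ (near_and c _ _ N1 N2)); intros z [A B]; cbv beta in *.
  rewrite Rabs_mult, pow_add.
  replace (M1 * M2 * (dist4 z c ^ j * dist4 z c ^ k))
    with (M1 * dist4 z c ^ j * (M2 * dist4 z c ^ k)) by ring.
  apply Rmult_le_compat; auto using Rabs_pos.
Qed.

Lemma bigO_S c k f : bigO c (S k) f -> bigO c k f.
Proof.
  intros H. destruct (bigO_pos _ _ _ H) as [M [HM N]]. exists M.
  apply (near_impl c _ _ (near_and c _ _ N (near_ball c 1 Rlt_0_1))); intros z [A B]; cbv beta in *.
  simpl in A. pose proof (pow_le _ k (dist4_ge0 z c)). pose proof (dist4_ge0 z c).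
  assert (dist4 z c * dist4 z c ^ k <= dist4 z c ^ k) by nra. nra.
Qed.

Lemma bigO_le c j k f : (j <= k)%nat -> bigO c k f -> bigO c j f.
Proof. induction 1; auto using bigO_S. Qed.

Lemma bigO_small c k f eps : bigO c (S k) f -> 0 < eps -> near c (fun z => Rabs (f z) <= eps).
Proof.
  intros H Heps. destruct (bigO_pos _ _ _ (bigO_le c 1 (S k) f ltac:(lia) H)) as [M [HM N]].
  assert (Hr : 0 < eps / M) by (apply Rdiv_lt_0_compat; lra).
  apply (near_impl c _ _ (near_and c _ _ N (near_ball c _ Hr))); intros z [A B]; cbv beta in *.
  simpl in A. apply (Rmult_lt_compat_l M) in B; [|lra].
  replace (M * (eps / M)) with eps in B by (field; lra). lra.
Qed.

Lemma bigO_x1 c : bigO c 1 (fun z => sx1 z - sx1 c).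
Proof. exists 1, 1. split; [lra|]. intros z _. simpl. pose proof (dist4_coords z c). lra. Qed.
Lemma bigO_x2 c : bigO c 1 (fun z => sx2 z - sx2 c).
Proof. exists 1, 1. split; [lra|]. intros z _. simpl. pose proof (dist4_coords z c). lra. Qed.
Lemma bigO_u1 c : bigO c 1 (fun z => su1 z - su1 c).
Proof. exists 1, 1. split; [lra|]. intros z _. simpl. pose proof (dist4_coords z c). lra. Qed.
Lemma bigO_u2 c : bigO c 1 (fun z => su2 z - su2 c).
Proof. exists 1, 1. split; [lra|]. intros z _. simpl. pose proof (dist4_coords z c). lra. Qed.

Lemma Rabs_exp_sub1_le t : Rabs t <= 1 / 2 -> Rabs (exp t - 1) <= 2 * Rabs t.
Proof.
  intros Ht.
  assert (Hb : - (1 / 2) <= t <= 1 / 2)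
    by (pose proof (Rle_abs t); pose proof (Rle_abs (- t)); rewrite Rabs_Ropp in *; lra).
  pose proof (exp_ineq1_le t) as Hlow. pose proof (exp_ineq1_le (- t)) as Hup.
  rewrite exp_Ropp in Hup. pose proof (exp_pos t).
  assert (exp t * (1 - t) <= 1).
  { apply (Rmult_le_compat_l (exp t)) in Hup; [|lra]. rewrite Rinv_r in Hup; lra. }
  apply Rabs_le. destruct (Rle_or_lt 0 t).
  - rewrite Rabs_right by lra. nra.
  - rewrite Rabs_left by lra. nra.
Qed.

Lemma bigO_exp_sub1 c k f : bigO c (S k) f -> bigO c (S k) (fun z => exp (f z) - 1).
Proof.
  intros [M HM]. exists (2 * M).
  pose proof (bigO_small c k f (1 / 2) (ex_intro _ M HM) ltac:(lra)) as Hs.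
  apply (near_impl c _ _ (near_and c _ _ HM Hs)); intros z [A B]; cbv beta in *.
  pose proof (Rabs_exp_sub1_le _ B). lra.
Qed.

Lemma near_inv_bound c g g0 : bigO c 1 (fun z => g z - g0) -> g0 <> 0 ->
  near c (fun z => g z <> 0 /\ Rabs (/ g z) <= 2 / Rabs g0).
Proof.
  intros H Hg0. pose proof (Rabs_pos_lt _ Hg0).
  apply (near_impl c _ _ (bigO_small c 0 _ (Rabs g0 / 2) H ltac:(lra))). intros z A.
  pose proof (Rabs_triang_inv g0 (g0 - g z)). replace (g0 - (g0 - g z)) with (g z) in H1 by ring.
  rewrite Rabs_minus_sym in A.
  assert (Hg : Rabs g0 / 2 <= Rabs (g z)) by lra.
  assert (g z <> 0) by (intros E; rewrite E, Rabs_R0 in Hg; lra).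
  split; [easy|]. rewrite Rabs_inv.
  apply (Rmult_le_reg_l (Rabs (g z))); [lra|]. rewrite Rinv_r by (apply Rabs_no_R0; easy).
  apply (Rmult_le_reg_l (Rabs g0)); [lra|]. field_simplify; lra.
Qed.

(** * First-order Taylor expansions *)

Definition taylor1 (c : state) (f : state -> R) (f0 : R) (df : state -> R) : Prop :=
  bigO c 1 df /\ bigO c 2 (fun z => f z - f0 - df z).

Section Taylor1.
Variable c : state.

Lemma taylor1_bigO1 f f0 df : taylor1 c f f0 df -> bigO c 1 (fun z => f z - f0).
Proof.
  intros [Hd Hr]. apply (bigO_ext _ _ _ (fun z => (f z - f0 - df z) + df z)); [intros; ring|].
  apply bigO_add; [apply (bigO_le c 1 2)|]; auto.
Qed.

Lemma taylor1_bigO0 f f0 df : taylor1 c f f0 df -> bigO c 0 f.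
Proof.
  intros H. apply (bigO_ext _ _ _ (fun z => (f z - f0) + f0)); [intros; ring|].
  apply bigO_add; [apply bigO_S, (taylor1_bigO1 _ _ _ H)|apply bigO_const].
Qed.

Lemma taylor1_ext f f0 df f0' df' :
  taylor1 c f f0 df -> f0 = f0' -> (forall z, df z = df' z) -> taylor1 c f f0' df'.
Proof.
  intros [Hd Hr] <- E. split.
  - apply (bigO_ext _ _ _ df); auto.
  - apply (bigO_ext _ _ _ (fun z => f z - f0 - df z)); auto. intros z. now rewrite E.
Qed.

Lemma taylor1_const a : taylor1 c (fun _ => a) a (fun _ => 0).
Proof.
  split; [apply bigO_0|]. apply (bigO_ext _ _ _ (fun _ => 0)); [intros; ring|apply bigO_0].
Qed.

Lemma taylor1_coord (pr : state -> R) :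
  bigO c 1 (fun z => pr z - pr c) -> taylor1 c pr (pr c) (fun z => pr z - pr c).
Proof.
  intros H. split; [easy|].
  apply (bigO_ext _ _ _ (fun _ => 0)); [intros; ring|apply bigO_0].
Qed.

Lemma taylor1_add f g f0 g0 df dg : taylor1 c f f0 df -> taylor1 c g g0 dg ->
  taylor1 c (fun z => f z + g z) (f0 + g0) (fun z => df z + dg z).
Proof.
  intros [Hf Rf] [Hg Rg]. split; [now apply bigO_add|].
  apply (bigO_ext _ _ _ (fun z => (f z - f0 - df z) + (g z - g0 - dg z))); [intros; ring|].
  now apply bigO_add.
Qed.

Lemma taylor1_opp f f0 df :
  taylor1 c f f0 df -> taylor1 c (fun z => - f z) (- f0) (fun z => - df z).
Proof.
  intros [Hf Rf]. split; [now apply bigO_opp|].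
  apply (bigO_ext _ _ _ (fun z => - (f z - f0 - df z))); [intros; ring|]. now apply bigO_opp.
Qed.

Lemma taylor1_sub f g f0 g0 df dg : taylor1 c f f0 df -> taylor1 c g g0 dg ->
  taylor1 c (fun z => f z - g z) (f0 - g0) (fun z => df z - dg z).
Proof. intros Hf Hg. now apply taylor1_add, taylor1_opp. Qed.

Lemma taylor1_mul f g f0 g0 df dg : taylor1 c f f0 df -> taylor1 c g g0 dg ->
  taylor1 c (fun z => f z * g z) (f0 * g0) (fun z => f0 * dg z + g0 * df z).
Proof.
  intros Hf Hg. pose proof (taylor1_bigO0 _ _ _ Hg) as G0.
  pose proof (taylor1_bigO1 _ _ _ Hg) as G1.
  destruct Hf as [Df Rf], Hg as [Dg Rg]. split.
  - apply bigO_add; apply (bigO_mul c 0 1); auto using bigO_const.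
  - apply (bigO_ext _ _ _
      (fun z => (f z - f0 - df z) * g z + df z * (g z - g0) + f0 * (g z - g0 - dg z)));
      [intros; ring|].
    repeat apply bigO_add.
    + now apply (bigO_mul c 2 0).
    + now apply (bigO_mul c 1 1).
    + apply (bigO_mul c 0 2); auto using bigO_const.
Qed.

Lemma taylor1_inv g g0 dg : taylor1 c g g0 dg -> g0 <> 0 ->
  taylor1 c (fun z => / g z) (/ g0) (fun z => - dg z / g0 ^ 2).
Proof.
  intros Hg Hg0. pose proof (taylor1_bigO1 _ _ _ Hg) as G1. destruct Hg as [Dg Rg].
  destruct (near_inv_bound c g g0 G1 Hg0) as [r [Hr Hinv]].
  assert (Iv : bigO c 0 (fun z => / g z)).
  { exists (2 / Rabs g0), r. split; [easy|].
    intros z Hz. simpl. rewrite Rmult_1_r. apply Hinv, Hz. }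
  split.
  - apply (bigO_ext _ _ _ (fun z => (- / g0 ^ 2) * dg z)); [intros z; cbv beta; unfold Rdiv; ring|].
    apply (bigO_mul c 0 1); auto using bigO_const.
  - apply bigO_ext_near with
      (fun z => - (g z - g0 - dg z) * (/ g z * / g0) + dg z * (g z - g0) * (/ g z * / g0 ^ 2)).
    + exists r. split; [easy|]. intros z Hz. destruct (Hinv z Hz) as [Hgz _]. field. tauto.
    + apply bigO_add.
      * apply (bigO_mul c 2 0); [now apply bigO_opp|].
        apply (bigO_mul c 0 0); auto using bigO_const.
      * apply (bigO_mul c 2 0); [now apply (bigO_mul c 1 1)|].
        apply (bigO_mul c 0 0); auto using bigO_const.
Qed.

Lemma taylor1_div f g f0 g0 df dg : taylor1 c f f0 df -> taylor1 c g g0 dg -> g0 <> 0 ->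
  taylor1 c (fun z => f z / g z) (f0 / g0) (fun z => f0 * (- dg z / g0 ^ 2) + / g0 * df z).
Proof. intros Hf Hg Hg0. exact (taylor1_mul _ _ _ _ _ _ Hf (taylor1_inv _ _ _ Hg Hg0)). Qed.

Lemma taylor1_pow2 f f0 df : taylor1 c f f0 df ->
  taylor1 c (fun z => f z ^ 2) (f0 ^ 2) (fun z => 2 * f0 * df z).
Proof.
  intros Hf. eapply taylor1_ext.
  - exact (taylor1_mul _ _ _ _ _ _ Hf (taylor1_mul _ _ _ _ _ _ Hf (taylor1_const 1))).
  - ring.
  - intros z. cbv beta. ring.
Qed.

Lemma taylor1_exp g : taylor1 c g 0 (fun _ => 0) ->
  taylor1 c (fun z => exp (g z)) 1 (fun _ => 0).
Proof.
  intros [_ Rg]. split; [apply bigO_0|].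
  apply (bigO_ext _ _ _ (fun z => exp (g z) - 1)); [intros; ring|].
  apply bigO_exp_sub1. revert Rg. apply bigO_ext. intros z. ring.
Qed.

End Taylor1.

Lemma taylor1_x1 c : taylor1 c (fun z => sx1 z) (sx1 c) (fun z => sx1 z - sx1 c).
Proof. exact (taylor1_coord c sx1 (bigO_x1 c)). Qed.
Lemma taylor1_x2 c : taylor1 c (fun z => sx2 z) (sx2 c) (fun z => sx2 z - sx2 c).
Proof. exact (taylor1_coord c sx2 (bigO_x2 c)). Qed.
Lemma taylor1_u1 c : taylor1 c (fun z => su1 z) (su1 c) (fun z => su1 z - su1 c).
Proof. exact (taylor1_coord c su1 (bigO_u1 c)). Qed.
Lemma taylor1_u2 c : taylor1 c (fun z => su2 z) (su2 c) (fun z => su2 z - su2 c).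
Proof. exact (taylor1_coord c su2 (bigO_u2 c)). Qed.

Ltac taylor1_step :=
  first
  [ apply taylor1_const
  | apply taylor1_x1 | apply taylor1_x2 | apply taylor1_u1 | apply taylor1_u2
  | apply taylor1_add | apply taylor1_sub | apply taylor1_opp | apply taylor1_mul
  | apply taylor1_div | apply taylor1_inv | apply taylor1_pow2 | apply taylor1_exp ].

(** * Lyapunov's direct method *)

Lemma continuous_induction (P : R -> Prop) (b : R) :
  (forall tau, 0 <= tau <= b -> (forall u, 0 <= u < tau -> P u) ->
     exists del, 0 < del /\ forall u, tau <= u < tau + del -> P u) ->
  forall t, 0 <= t <= b -> P t.
Proof.
  intros Hstep t Ht.
  set (E s := 0 <= s <= b /\ forall u, 0 <= u <= s -> P u).
  assert (E0 : E 0).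
  { destruct (Hstep 0 ltac:(lra) ltac:(intros; lra)) as [del [Hdel HP]].
    split; [lra|]. intros u Hu. apply HP. lra. }
  assert (Eb : bound E) by (exists b; intros s [Hs _]; lra).
  destruct (completeness E Eb (ex_intro _ 0 E0)) as [tau [Hub Hlub]].
  assert (Htau : 0 <= tau <= b) by (split; [apply Hub, E0|apply Hlub; intros s [Hs _]; lra]).
  assert (Below : forall u, 0 <= u < tau -> P u).
  { intros u Hu. destruct (classic (P u)) as [|HnP]; [easy|exfalso].
    assert (tau <= u); [|lra]. apply Hlub. intros s [_ Hs].
    destruct (Rle_or_lt u s); [|lra]. exfalso. apply HnP, Hs. lra. }
  destruct (Hstep tau Htau Below) as [del [Hdel Above]].
  assert (Hb : tau = b).
  { set (s := Rmin (tau + del / 2) b).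
    assert (Es : E s).
    { split; [split; [apply Rmin_glb; lra|apply Rmin_r]|].
      intros u Hu. destruct (Rlt_or_le u tau); [apply Below; lra|].
      apply Above. split; [lra|]. assert (s <= tau + del / 2) by apply Rmin_l. lra. }
    pose proof (Hub s Es). unfold s in *. destruct (Rle_dec (tau + del / 2) b);
      [rewrite Rmin_left in *|rewrite Rmin_right in *]; lra. }
  destruct (Rlt_or_le t tau); [apply Below|apply Above]; lra.
Qed.

Lemma nonincreasing_of_deriv_nonpos (f df : R -> R) a b : a <= b ->
  (forall x, a < x < b -> derivable_pt_lim f x (df x)) ->
  (forall x, a <= x <= b -> continuity_pt f x) ->
  (forall x, a < x < b -> df x <= 0) -> f b <= f a.
Proof.
  intros Hab HD HC Hneg. destruct (Req_dec a b) as [->|Hn]; [lra|].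
  assert (pr1 : forall x, a < x < b -> derivable_pt f x)
    by (intros x Hx; exists (df x); apply HD, Hx).
  assert (pr2 : forall x, a < x < b -> derivable_pt id x) by (intros; apply derivable_pt_id).
  destruct (MVT f id a b pr1 pr2 ltac:(lra) HC) as [x [Hx E]].
  { intros x _. apply derivable_continuous_pt, derivable_pt_id. }
  rewrite (derive_pt_eq_0 f x (df x) (pr1 x Hx) (HD x Hx)) in E.
  rewrite (derive_pt_eq_0 id x 1 (pr2 x Hx) (derivable_pt_lim_id x)) in E.
  unfold id in E. pose proof (Hneg x Hx). nra.
Qed.

(* A solution is only right-continuous at [0]; precomposing with [Rmax s 0] extends it
   constantly to the left, which makes [continuity_pt] at [0] meaningful. *)
Lemma derivable_pt_lim_Rmax0 (f : R -> R) t l : 0 < t -> derivable_pt_lim f t l ->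
  derivable_pt_lim (fun s => f (Rmax s 0)) t l.
Proof.
  intros Ht H eps Heps. destruct (H eps Heps) as [del Hdel].
  assert (P : 0 < Rmin del t) by (apply Rmin_glb_lt; [apply cond_pos|lra]).
  exists (mkposreal _ P). intros u Hu0 Hu. simpl in Hu.
  assert (Rabs u < t) by (eapply Rlt_le_trans; [exact Hu|apply Rmin_r]).
  assert (Rabs u < del) by (eapply Rlt_le_trans; [exact Hu|apply Rmin_l]).
  pose proof (Rle_abs (- u)). rewrite Rabs_Ropp in *.
  rewrite (Rmax_left (t + u)), (Rmax_left t) by lra. auto.
Qed.

Lemma continuity_pt_sol0 p T phi (g : state -> R) : sol_on p T phi ->
  (forall z w, Rabs (g z - g w) <= dist4 z w) ->
  continuity_pt (fun s => g (phi (Rmax s 0))) 0.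
Proof.
  intros [_ [_ HC]] Hg eps Heps. destruct (HC eps Heps) as [del [Hdel Hphi]].
  exists del. split; [lra|]. intros x [_ Hx]. simpl in *. unfold R_dist in *.
  rewrite (Rmax_left 0 0) by lra. eapply Rle_lt_trans; [apply Hg|]. apply Hphi.
  split; [apply Rmax_r|]. unfold Rmax. destruct (Rle_dec x 0); [lra|].
  rewrite Rminus_0_r in Hx. pose proof (Rle_abs x). lra.
Qed.

Lemma derivable_pt_lim_wsq (f : R -> R) w a t l : derivable_pt_lim f t l ->
  derivable_pt_lim (fun s => w * (f s - a) ^ 2) t (2 * w * (f t - a) * l).
Proof.
  intros H.
  pose proof (derivable_pt_lim_minus f (fun _ => a) t l 0 H (derivable_pt_lim_const a t)) as Hfa.
  pose proof (derivable_pt_lim_scal _ w t _ (derivable_pt_lim_mult _ _ t _ _ Hfa Hfa)) as Hw.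
  replace (2 * w * (f t - a) * l) with (w * ((l - 0) * (f t - a) + (f t - a) * (l - 0))) by ring.
  eapply derivable_pt_lim_ext; [|exact Hw].
  intros s. unfold mult_real_fct, mult_fct, minus_fct. ring.
Qed.

Lemma continuity_pt_wsq (f : R -> R) w a t : continuity_pt f t ->
  continuity_pt (fun s => w * (f s - a) ^ 2) t.
Proof.
  intros H.
  pose proof (continuity_pt_minus f (fun _ => a) t H
    (continuity_pt_const (fun _ => a) t (fun _ _ => eq_refl))) as Hfa.
  pose proof (continuity_pt_scal _ w t (continuity_pt_mult _ _ t Hfa Hfa)) as Hw.
  refine (continuity_pt_locally_ext _ _ 1 t Rlt_0_1 _ Hw).
  intros y _. unfold mult_real_fct, mult_fct, minus_fct. ring.
Qed.

Definition lyap (c : state) (w1 w2 w3 w4 : R) (z : state) : R :=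
  w1 * (sx1 z - sx1 c) ^ 2 + w2 * (sx2 z - sx2 c) ^ 2
  + w3 * (su1 z - su1 c) ^ 2 + w4 * (su2 z - su2 c) ^ 2.

Definition lyap_rate (p : params) (c : state) (w1 w2 w3 w4 : R) (z : state) : R :=
  2 * w1 * (sx1 z - sx1 c) * sx1 (F p z) + 2 * w2 * (sx2 z - sx2 c) * sx2 (F p z)
  + 2 * w3 * (su1 z - su1 c) * su1 (F p z) + 2 * w4 * (su2 z - su2 c) * su2 (F p z).

Lemma sqdist_lyap z c : sqdist z c = lyap c 1 1 1 1 z.
Proof. unfold sqdist, lyap. ring. Qed.

Lemma lyap_deriv p c w1 w2 w3 w4 T phi t : sol_on p T phi -> 0 < t < T ->
  derivable_pt_lim (fun s => lyap c w1 w2 w3 w4 (phi (Rmax s 0))) t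
    (lyap_rate p c w1 w2 w3 w4 (phi t)).
Proof.
  intros [_ [HD _]] Ht. destruct (HD t Ht) as [D1 [D2 [D3 D4]]].
  pose proof (fun f l D w a => derivable_pt_lim_wsq _ w a t l
                (derivable_pt_lim_Rmax0 f t l (proj1 Ht) D)) as Hsq.
  pose proof (derivable_pt_lim_plus _ _ t _ _
    (derivable_pt_lim_plus _ _ t _ _
      (derivable_pt_lim_plus _ _ t _ _ (Hsq _ _ D1 w1 (sx1 c)) (Hsq _ _ D2 w2 (sx2 c)))
      (Hsq _ _ D3 w3 (su1 c))) (Hsq _ _ D4 w4 (su2 c))) as HV.
  cbv beta in HV. rewrite (Rmax_left t 0) in HV by lra.
  unfold lyap_rate. eapply derivable_pt_lim_ext; [|exact HV]. reflexivity.
Qed.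

Lemma lyap_cont p c w1 w2 w3 w4 T phi t : sol_on p T phi -> 0 <= t < T ->
  continuity_pt (fun s => lyap c w1 w2 w3 w4 (phi (Rmax s 0))) t.
Proof.
  intros Hsol Ht. destruct (Req_dec t 0) as [->|Hn].
  - pose proof (fun g w a H => continuity_pt_wsq _ w a 0 (continuity_pt_sol0 p T phi g Hsol H))
      as Hsq.
    assert (Hc := fun z w => dist4_coords z w).
    repeat apply continuity_pt_plus; apply Hsq; intros z w; apply Hc.
  - apply derivable_continuous_pt. exists (lyap_rate p c w1 w2 w3 w4 (phi t)).
    apply (lyap_deriv p c w1 w2 w3 w4 T); [easy|lra].
Qed.

Lemma sqdist_sol_lt_persists p c T phi tau b : sol_on p T phi -> 0 <= tau < T ->
  sqdist (phi tau) c < b ->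
  exists del, 0 < del /\ forall u, tau <= u < tau + del -> sqdist (phi u) c < b.
Proof.
  intros Hsol Htau Hlt.
  destruct (lyap_cont p c 1 1 1 1 T phi tau Hsol Htau (b - sqdist (phi tau) c) ltac:(lra))
    as [del [Hdel Hc]].
  exists del. split; [lra|]. intros u Hu.
  destruct (Req_dec u tau) as [->|Hne]; [easy|].
  assert (Hd : R_dist (lyap c 1 1 1 1 (phi (Rmax u 0))) (lyap c 1 1 1 1 (phi (Rmax tau 0)))
               < b - sqdist (phi tau) c).
  { apply Hc. split; [split; [exact I|auto]|]. simpl. unfold R_dist. rewrite Rabs_right; lra. }
  rewrite (Rmax_left u 0), (Rmax_left tau 0), <- !sqdist_lyap in Hd by lra.
  unfold R_dist in Hd. pose proof (Rle_abs (sqdist (phi u) c - sqdist (phi tau) c)). lra.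
Qed.

Section Lyapunov.
Variables (p : params) (c : state) (w1 w2 w3 w4 r k : R).
Hypotheses (Hw1 : 0 < w1) (Hw2 : 0 < w2) (Hw3 : 0 < w3) (Hw4 : 0 < w4) (Hr : 0 < r) (Hk : 0 < k).
Hypothesis Hrate : forall z, dist4 z c < r -> lyap_rate p c w1 w2 w3 w4 z <= - k * sqdist z c.

Local Notation V := (lyap c w1 w2 w3 w4).
Local Notation wmin := (Rmin (Rmin w1 w2) (Rmin w3 w4)).
Local Notation wsum := (w1 + w2 + w3 + w4).

Lemma lyap_bounds z : wmin * sqdist z c <= V z <= wsum * sqdist z c.
Proof.
  unfold lyap, sqdist.
  assert (wmin <= w1) by (eapply Rle_trans; apply Rmin_l).
  assert (wmin <= w2) by (eapply Rle_trans; [apply Rmin_l|apply Rmin_r]).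
  assert (wmin <= w3) by (eapply Rle_trans; [apply Rmin_r|apply Rmin_l]).
  assert (wmin <= w4) by (eapply Rle_trans; apply Rmin_r).
  pose proof (pow2_ge_0 (sx1 z - sx1 c)); pose proof (pow2_ge_0 (sx2 z - sx2 c)).
  pose proof (pow2_ge_0 (su1 z - su1 c)); pose proof (pow2_ge_0 (su2 z - su2 c)).
  split; nra.
Qed.

Lemma wmin_pos : 0 < wmin.
Proof. repeat apply Rmin_glb_lt; auto. Qed.

Lemma wmin_le_wsum : wmin <= wsum.
Proof. assert (wmin <= w1) by (eapply Rle_trans; apply Rmin_l). lra. Qed.

(* With [k' = k / wsum] the rate bound gives [V' <= - k' V], so [V (1 + k' t)] does not
   increase: a polynomial stand-in for the exponential decay of [V]. *)
Lemma lyap_decay T phi tau : sol_on p T phi -> 0 <= tau < T ->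
  (forall u, 0 <= u < tau -> dist4 (phi u) c < r) ->
  V (phi tau) * (1 + k / wsum * tau) <= V (phi 0).
Proof.
  intros Hsol Htau Hin. pose proof wmin_pos. pose proof wmin_le_wsum.
  set (k' := k / wsum). assert (Hk' : 0 < k') by (apply Rdiv_lt_0_compat; lra).
  pose proof (nonincreasing_of_deriv_nonpos
    (fun s => V (phi (Rmax s 0)) * (1 + k' * s))
    (fun s => lyap_rate p c w1 w2 w3 w4 (phi s) * (1 + k' * s) + V (phi s) * (0 + k' * 1))
    0 tau (proj1 Htau)) as D.
  cbv beta in D. rewrite (Rmax_left tau 0), (Rmax_left 0 0) in D by lra.
  replace (V (phi 0) * (1 + k' * 0)) with (V (phi 0)) in D by ring.
  apply D; clear D.
  - intros x Hx. pose proof (lyap_deriv p c w1 w2 w3 w4 T phi x Hsol ltac:(lra)) as DV.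
    pose proof (derivable_pt_lim_plus _ _ x _ _ (derivable_pt_lim_const 1 x)
      (derivable_pt_lim_scal _ k' x _ (derivable_pt_lim_id x))) as DL.
    pose proof (derivable_pt_lim_mult _ _ x _ _ DV DL) as DP.
    cbv beta in DP. rewrite (Rmax_left x 0) in DP by lra. exact DP.
  - intros x Hx. apply (continuity_pt_mult _ (fun s => 1 + k' * s)).
    + apply (lyap_cont p c w1 w2 w3 w4 T); [easy|lra].
    + apply derivable_continuous_pt. exists (0 + k' * 1).
      exact (derivable_pt_lim_plus _ _ x _ _ (derivable_pt_lim_const 1 x)
               (derivable_pt_lim_scal _ k' x _ (derivable_pt_lim_id x))).
  - intros x Hx. pose proof (Hrate (phi x) (Hin x ltac:(lra))).
    destruct (lyap_bounds (phi x)) as [B1 B2]. pose proof (sqdist_ge0 (phi x) c).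
    assert (k' * V (phi x) <= k * sqdist (phi x) c).
    { unfold k'. apply (Rmult_le_reg_l wsum); [lra|].
      replace (wsum * (k / wsum * V (phi x))) with (k * V (phi x)) by (field; lra). nra. }
    assert (0 <= V (phi x)) by nra.
    set (rt := lyap_rate p c w1 w2 w3 w4 (phi x)) in *.
    assert ((rt + k' * V (phi x)) * (1 + k' * x) <= 0).
    { assert (0 < 1 + k' * x) by nra. assert (rt + k' * V (phi x) <= 0) by lra. nra. }
    assert (0 <= k' * k' * x * V (phi x))
      by (apply Rmult_le_pos; [apply Rmult_le_pos; [apply Rmult_le_pos|]|]; lra).
    nra.
Qed.

Lemma lyap_stays_small e1 T phi : 0 < e1 <= r -> sol_on p T phi ->
  dist4 (phi 0) c < e1 / 2 * (wmin / wsum) ->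
  forall t, 0 <= t < T -> dist4 (phi t) c < e1.
Proof.
  intros He1 Hsol H0 t Ht. pose proof wmin_pos. pose proof wmin_le_wsum.
  assert (Hq : 0 < wmin / wsum <= 1).
  { split; [apply Rdiv_lt_0_compat; lra|].
    apply (Rmult_le_reg_l wsum); [lra|]. field_simplify; lra. }
  apply (continuous_induction (fun u => dist4 (phi u) c < e1) t); [|lra].
  intros tau Htau Hin.
  assert (Hdec : V (phi tau) <= V (phi 0)).
  { pose proof (lyap_decay T phi tau Hsol ltac:(lra)
                 ltac:(intros u Hu; specialize (Hin u Hu); lra)).
    pose proof (sqdist_ge0 (phi tau) c). destruct (lyap_bounds (phi tau)) as [B _].
    assert (0 <= k / wsum * tau) by (apply Rmult_le_pos; [apply Rlt_le, Rdiv_lt_0_compat|]; lra).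
    assert (0 <= V (phi tau)) by nra.
    assert (0 <= V (phi tau) * (k / wsum * tau)) by (apply Rmult_le_pos; lra). nra. }
  assert (Hsmall : sqdist (phi tau) c < (e1 / 2) ^ 2).
  { destruct (lyap_bounds (phi tau)) as [B1 _], (lyap_bounds (phi 0)) as [_ B2].
    assert (He : 0 < e1 / 2 * (wmin / wsum)) by (apply Rmult_lt_0_compat; lra).
    apply (dist4_lt_iff (phi 0) c _ He) in H0.
    assert (wsum * (e1 / 2 * (wmin / wsum)) ^ 2 <= wmin * (e1 / 2) ^ 2).
    { replace (wsum * (e1 / 2 * (wmin / wsum)) ^ 2) with (wmin * (e1 / 2) ^ 2 * (wmin / wsum))
        by (field; lra).
      pose proof (pow2_ge_0 (e1 / 2)). assert (0 <= wmin * (e1 / 2) ^ 2) by nra. nra. }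
    assert (wmin * sqdist (phi tau) c < wmin * (e1 / 2) ^ 2) by nra. nra. }
  destruct (sqdist_sol_lt_persists p c T phi tau (e1 ^ 2) Hsol ltac:(lra) ltac:(nra))
    as [del [Hdel Hnext]].
  exists del. split; [easy|]. intros u Hu. apply dist4_lt_iff; [lra|]. apply Hnext. lra.
Qed.

Theorem lyapunov_stable : loc_asym_stable p c.
Proof.
  pose proof wmin_pos as Hmin. pose proof wmin_le_wsum as Hle.
  assert (Hq : 0 < wmin / wsum) by (apply Rdiv_lt_0_compat; lra).
  split.
  - intros eps Heps. set (e1 := Rmin eps r).
    assert (He1 : 0 < e1 <= r) by (split; [apply Rmin_glb_lt; lra|apply Rmin_r]).
    exists (e1 / 2 * (wmin / wsum)). split; [apply Rmult_lt_0_compat; lra|].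
    intros T phi Hsol H0 t Ht. eapply Rlt_le_trans.
    + exact (lyap_stays_small e1 T phi He1 Hsol H0 t Ht).
    + apply Rmin_l.
  - exists (r / 2 * (wmin / wsum)). split; [apply Rmult_lt_0_compat; lra|].
    intros phi Hall H0 eps Heps.
    assert (Hin : forall t, 0 <= t -> dist4 (phi t) c < r)
      by (intros t Ht; exact (lyap_stays_small r (t + 1) phi ltac:(lra)
                                (Hall (t + 1) ltac:(lra)) H0 t ltac:(lra))).
    set (k' := k / wsum). assert (Hk' : 0 < k') by (apply Rdiv_lt_0_compat; lra).
    assert (HV0 : 0 <= V (phi 0))
      by (destruct (lyap_bounds (phi 0)) as [B _]; pose proof (sqdist_ge0 (phi 0) c); nra).
    set (V0 := V (phi 0)) in *.
    exists (V0 / (wmin * k' * eps ^ 2)). intros t Ht.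
    assert (Hpos : 0 < wmin * k' * eps ^ 2)
      by (apply Rmult_lt_0_compat; [apply Rmult_lt_0_compat|apply pow_lt]; lra).
    assert (Ht0 : 0 <= t) by (eapply Rle_trans; [|exact Ht]; apply Rmult_le_pos; [lra|];
                              apply Rlt_le, Rinv_0_lt_compat; lra).
    assert (Hbig : V0 <= wmin * k' * eps ^ 2 * t).
    { apply (Rmult_le_compat_l (wmin * k' * eps ^ 2)) in Ht; [|lra].
      replace (wmin * k' * eps ^ 2 * (V0 / (wmin * k' * eps ^ 2))) with V0 in Ht by (field; lra).
      exact Ht. }
    pose proof (lyap_decay (t + 1) phi t (Hall (t + 1) ltac:(lra)) ltac:(lra)
                  (fun u Hu => Hin u ltac:(lra))) as Hd. fold k' V0 in Hd.
    destruct (lyap_bounds (phi t)) as [B _].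
    apply dist4_lt_iff; [lra|].
    destruct (Rlt_or_le (sqdist (phi t) c) (eps ^ 2)) as [|Hge]; [easy|exfalso].
    assert (wmin * eps ^ 2 * (1 + k' * t) <= V0).
    { eapply Rle_trans; [|exact Hd]. apply Rmult_le_compat_r; [nra|].
      apply (Rle_trans _ (wmin * sqdist (phi t) c)); [|exact B]. apply Rmult_le_compat_l; lra. }
    pose proof (pow_lt _ 2 Heps). nra.
Qed.
End Lyapunov.

(** * Stability from the linearization *)

Definition dissipative (a b c d : R) : Prop :=
  exists w1 w2 q, 0 < w1 /\ 0 < w2 /\ 0 < q /\ forall y1 y2,
    w1 * y1 * (a * y1 + b * y2) + w2 * y2 * (c * y1 + d * y2) <= - q * (y1 ^ 2 + y2 ^ 2).

Lemma dissipative_swap a b c d : dissipative a b c d -> dissipative d c b a.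
Proof.
  intros [w1 [w2 [q [H1 [H2 [Hq H]]]]]]. exists w2, w1, q. repeat split; auto.
  intros y1 y2. specialize (H y2 y1). lra.
Qed.

(* Young's inequality [b y1 y2 <= (-a/2) y1^2 + b^2/(-2a) y2^2] absorbs the cross term. *)
Lemma dissipative_upper a b d : a < 0 -> d < 0 -> dissipative a b 0 d.
Proof.
  intros Ha Hd. exists 1, ((- a + b ^ 2 / (- a)) / (- 2 * d)), (- a / 2).
  assert (Hb : 0 <= b ^ 2 / - a) by (apply Rle_mult_inv_pos; [apply pow2_ge_0|lra]).
  repeat split; [lra| apply Rdiv_lt_0_compat; lra | lra |].
  intros y1 y2.
  replace (1 * y1 * (a * y1 + b * y2) + (- a + b ^ 2 / - a) / (- 2 * d) * y2 * (0 * y1 + d * y2))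
    with (- (- a / 2) * (y1 ^ 2 + y2 ^ 2) - (a * y1 + b * y2) ^ 2 / (- 2 * a)) by (field; lra).
  assert (0 <= (a * y1 + b * y2) ^ 2 / (- 2 * a))
    by (apply Rle_mult_inv_pos; [apply pow2_ge_0|lra]).
  lra.
Qed.

Lemma dissipative_opposite a b c d : a < 0 -> d < 0 -> b * c < 0 -> dissipative a b c d.
Proof.
  intros Ha Hd Hbc. exists (Rabs c), (Rabs b), (Rmin (- Rabs c * a) (- Rabs b * d)).
  assert (b <> 0 /\ c <> 0) as [Hb Hc] by (split; intros ->; lra).
  pose proof (Rabs_pos_lt _ Hb). pose proof (Rabs_pos_lt _ Hc).
  repeat split; auto; [apply Rmin_glb_lt; nra|].
  intros y1 y2.
  assert (Hcross : Rabs c * b + Rabs b * c = 0).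
  { destruct (Rlt_or_le b 0).
    - rewrite (Rabs_left b), (Rabs_right c) by nra. ring.
    - rewrite (Rabs_right b), (Rabs_left c) by nra. ring. }
  pose proof (Rmin_l (- Rabs c * a) (- Rabs b * d)).
  pose proof (Rmin_r (- Rabs c * a) (- Rabs b * d)).
  pose proof (pow2_ge_0 y1). pose proof (pow2_ge_0 y2).
  replace (Rabs c * y1 * (a * y1 + b * y2) + Rabs b * y2 * (c * y1 + d * y2))
    with (Rabs c * a * y1 ^ 2 + Rabs b * d * y2 ^ 2 + (Rabs c * b + Rabs b * c) * y1 * y2) by ring.
  rewrite Hcross. nra.
Qed.

Lemma dissipative_of_signs a b c d : a < 0 -> d < 0 -> b * c <= 0 -> dissipative a b c d.
Proof.
  intros Ha Hd Hbc. destruct (Req_dec c 0) as [->|Hc]; [now apply dissipative_upper|].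
  destruct (Req_dec b 0) as [->|Hb].
  - apply dissipative_swap, dissipative_upper; auto.
  - apply dissipative_opposite; auto. destruct Hbc; [easy|]. exfalso.
    apply Rmult_integral in H as [|]; auto.
Qed.

Lemma lyap_rate_linear_part p c w1 w2 w3 w4 L1 L2 L3 L4 :
  bigO c 2 (fun z => sx1 (F p z) - L1 z) -> bigO c 2 (fun z => sx2 (F p z) - L2 z) ->
  bigO c 2 (fun z => su1 (F p z) - L3 z) -> bigO c 2 (fun z => su2 (F p z) - L4 z) ->
  bigO c 3 (fun z => lyap_rate p c w1 w2 w3 w4 z
    - (2 * w1 * (sx1 z - sx1 c) * L1 z + 2 * w2 * (sx2 z - sx2 c) * L2 z
       + 2 * w3 * (su1 z - su1 c) * L3 z + 2 * w4 * (su2 z - su2 c) * L4 z)).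
Proof.
  intros R1 R2 R3 R4.
  apply (bigO_ext _ _ _ (fun z =>
      2 * w1 * (sx1 z - sx1 c) * (sx1 (F p z) - L1 z)
      + 2 * w2 * (sx2 z - sx2 c) * (sx2 (F p z) - L2 z)
      + 2 * w3 * (su1 z - su1 c) * (su1 (F p z) - L3 z)
      + 2 * w4 * (su2 z - su2 c) * (su2 (F p z) - L4 z))).
  { intros z. unfold lyap_rate. ring. }
  repeat apply bigO_add; apply (bigO_mul c 1 2); auto;
    apply (bigO_mul c 0 1); auto using bigO_const, bigO_x1, bigO_x2, bigO_u1, bigO_u2.
Qed.

Lemma stable_of_linear_part p c w1 w2 w3 w4 q L1 L2 L3 L4 :
  0 < w1 -> 0 < w2 -> 0 < w3 -> 0 < w4 -> 0 < q ->
  (forall z, 2 * w1 * (sx1 z - sx1 c) * L1 z + 2 * w2 * (sx2 z - sx2 c) * L2 z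
     + 2 * w3 * (su1 z - su1 c) * L3 z + 2 * w4 * (su2 z - su2 c) * L4 z
     <= - (2 * q) * sqdist z c) ->
  bigO c 2 (fun z => sx1 (F p z) - L1 z) -> bigO c 2 (fun z => sx2 (F p z) - L2 z) ->
  bigO c 2 (fun z => su1 (F p z) - L3 z) -> bigO c 2 (fun z => su2 (F p z) - L4 z) ->
  loc_asym_stable p c.
Proof.
  intros Hw1 Hw2 Hw3 Hw4 Hq HQ R1 R2 R3 R4.
  destruct (bigO_pos _ _ _ (lyap_rate_linear_part p c w1 w2 w3 w4 _ _ _ _ R1 R2 R3 R4))
    as [M [HM [r [Hr N]]]].
  assert (Hr' : 0 < Rmin r (q / M)) by (apply Rmin_glb_lt; [lra|apply Rdiv_lt_0_compat; lra]).
  apply (lyapunov_stable p c w1 w2 w3 w4 (Rmin r (q / M)) q); auto.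
  intros z Hz.
  assert (Hdr : dist4 z c < r) by (eapply Rlt_le_trans; [exact Hz|apply Rmin_l]).
  assert (Hdm : M * dist4 z c <= q).
  { apply (Rmult_le_reg_l (/ M)); [apply Rinv_0_lt_compat; lra|].
    rewrite <- Rmult_assoc, Rinv_l, Rmult_1_l by lra.
    left. eapply Rlt_le_trans; [exact Hz|]. rewrite Rmult_comm. apply Rmin_r. }
  specialize (N z Hdr). cbv beta in N. pose proof (HQ z). pose proof (dist4_ge0 z c).
  pose proof (sqdist_ge0 z c).
  assert (M * dist4 z c ^ 3 <= q * sqdist z c).
  { replace (M * dist4 z c ^ 3) with (M * dist4 z c * dist4 z c ^ 2) by ring.
    rewrite dist4_pow2. apply Rmult_le_compat_r; lra. }
  match type of N with Rabs ?x <= _ => pose proof (Rle_abs x) end.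
  lra.
Qed.

Lemma stable_of_linearization p c a11 a12 a21 a22 b11 b12 b21 b22 :
  dissipative a11 a12 a21 a22 -> dissipative b11 b12 b21 b22 ->
  bigO c 2 (fun z => sx1 (F p z) - (a11 * (sx1 z - sx1 c) + a12 * (sx2 z - sx2 c))) ->
  bigO c 2 (fun z => sx2 (F p z) - (a21 * (sx1 z - sx1 c) + a22 * (sx2 z - sx2 c))) ->
  bigO c 2 (fun z => su1 (F p z) - (b11 * (su1 z - su1 c) + b12 * (su2 z - su2 c))) ->
  bigO c 2 (fun z => su2 (F p z) - (b21 * (su1 z - su1 c) + b22 * (su2 z - su2 c))) ->
  loc_asym_stable p c.
Proof.
  intros [v1 [v2 [qx [Hv1 [Hv2 [Hqx Hx]]]]]] [w1 [w2 [qu [Hw1 [Hw2 [Hqu Hu]]]]]].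
  apply (stable_of_linear_part p c v1 v2 w1 w2 (Rmin qx qu)); auto; [apply Rmin_glb_lt; lra|].
  intros z.
  pose proof (Hx (sx1 z - sx1 c) (sx2 z - sx2 c)). pose proof (Hu (su1 z - su1 c) (su2 z - su2 c)).
  pose proof (Rmin_l qx qu). pose proof (Rmin_r qx qu).
  assert (Rmin qx qu * ((sx1 z - sx1 c) ^ 2 + (sx2 z - sx2 c) ^ 2)
          <= qx * ((sx1 z - sx1 c) ^ 2 + (sx2 z - sx2 c) ^ 2))
    by (apply Rmult_le_compat_r; [pose proof (pow2_ge_0 (sx1 z - sx1 c));
                                   pose proof (pow2_ge_0 (sx2 z - sx2 c))|]; lra).
  assert (Rmin qx qu * ((su1 z - su1 c) ^ 2 + (su2 z - su2 c) ^ 2)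
          <= qu * ((su1 z - su1 c) ^ 2 + (su2 z - su2 c) ^ 2))
    by (apply Rmult_le_compat_r; [pose proof (pow2_ge_0 (su1 z - su1 c));
                                   pose proof (pow2_ge_0 (su2 z - su2 c))|]; lra).
  unfold sqdist. lra.
Qed.

(** * Linearization of the model at zero strategies *)

Lemma K1_0 p : K1 p 0 = K01 p.
Proof.
  unfold K1. replace (- 0 ^ 2 / (2 * sK1 p ^ 2)) with 0 by (unfold Rdiv; ring).
  now rewrite exp_0, Rmult_1_r.
Qed.

Lemma K2_0 p : K2 p 0 = K02 p.
Proof.
  unfold K2. replace (- 0 ^ 2 / (2 * sK2 p ^ 2)) with 0 by (unfold Rdiv; ring).
  now rewrite exp_0, Rmult_1_r.
Qed.

Lemma aa_diag p u : aa p u u = a0 p.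
Proof.
  unfold aa. replace (- (u - u) ^ 2 / (2 * sa p ^ 2)) with 0 by (unfold Rdiv; ring).
  now rewrite exp_0, Rmult_1_r.
Qed.

Lemma taylor1_gauss c (g : state -> R) dg s : taylor1 c g 0 dg ->
  taylor1 c (fun z => exp (- g z ^ 2 / (2 * s ^ 2))) 1 (fun _ => 0).
Proof.
  intros Hg. apply taylor1_exp. eapply taylor1_ext.
  - exact (taylor1_mul _ _ _ _ _ _ _ (taylor1_opp _ _ _ _ (taylor1_pow2 _ _ _ _ Hg))
             (taylor1_const c (/ (2 * s ^ 2)))).
  - ring.
  - intros z. cbv beta. ring.
Qed.

Lemma taylor1_K1 p c : su1 c = 0 -> taylor1 c (fun z => K1 p (su1 z)) (K01 p) (fun _ => 0).
Proof.
  intros H. unfold K1. eapply taylor1_ext.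
  - apply taylor1_mul; [apply taylor1_const|]. apply (taylor1_gauss c su1 (fun z => su1 z - su1 c)).
    rewrite <- H. apply taylor1_u1.
  - ring.
  - intros z. cbv beta. ring.
Qed.

Lemma taylor1_K2 p c : su2 c = 0 -> taylor1 c (fun z => K2 p (su2 z)) (K02 p) (fun _ => 0).
Proof.
  intros H. unfold K2. eapply taylor1_ext.
  - apply taylor1_mul; [apply taylor1_const|]. apply (taylor1_gauss c su2 (fun z => su2 z - su2 c)).
    rewrite <- H. apply taylor1_u2.
  - ring.
  - intros z. cbv beta. ring.
Qed.

Lemma taylor1_aa p c : su1 c = su2 c ->
  taylor1 c (fun z => aa p (su1 z) (su2 z)) (a0 p) (fun _ => 0).
Proof.
  intros H. unfold aa. eapply taylor1_ext.
  - apply taylor1_mul; [apply taylor1_const|].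
    apply (taylor1_gauss c (fun z => su1 z - su2 z) (fun z => (su1 z - su1 c) - (su2 z - su2 c))).
    eapply taylor1_ext; [apply taylor1_sub; [apply taylor1_u1|apply taylor1_u2]| |]; [lra|easy].
  - ring.
  - intros z. cbv beta. ring.
Qed.

Definition saturation (p : params) (x1 : R) : R := / (1 + h p * a0 p * x1).

Section Linearization.
Variables (p : params) (x1s x2s : R).
Hypotheses (HK01 : 0 < K01 p) (HK02 : 0 < K02 p) (HsK1 : 0 < sK1 p) (HsK2 : 0 < sK2 p)
  (Ha0 : 0 < a0 p) (Hsa : 0 < sa p) (Hh : 0 < h p) (Hx1 : 0 <= x1s).
Local Notation c := (mkState x1s x2s 0 0).
Local Notation q := (saturation p x1s).

Ltac taylor1_model :=
  repeat first
  [ apply taylor1_K1; reflexivity | apply taylor1_K2; reflexivity | apply taylor1_aa; reflexivity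
  | taylor1_step ].

Lemma saturation_denom_pos : 0 < 1 + h p * a0 p * x1s.
Proof. pose proof (Rmult_lt_0_compat _ _ Hh Ha0). nra. Qed.

Ltac close_linearization :=
  pose proof saturation_denom_pos; intros; cbn [sx1 sx2 su1 su2]; unfold G1, G2, saturation;
  cbn [sx1 sx2 su1 su2]; rewrite ?K1_0, ?K2_0, ?aa_diag;
  first [field | idtac];
  repeat split; apply Rgt_not_eq; repeat (apply Rmult_lt_0_compat || apply pow_lt); lra.

Lemma linearize_x1 : taylor1 c (fun z => sx1 (F p z)) (sx1 (F p c))
  (fun z => (G1 p 0 c + x1s * (h p * a0 p ^ 2 * x2s * q ^ 2 - r1 p / K01 p)) * (sx1 z - x1s)
            - x1s * a0 p * q * (sx2 z - x2s)).
Proof.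
  unfold F. cbn [sx1 sx2 su1 su2]. eapply taylor1_ext; [taylor1_model| |]; close_linearization.
Qed.

Lemma linearize_x2 : taylor1 c (fun z => sx2 (F p z)) (sx2 (F p c))
  (fun z => x2s * e p * a0 p * q ^ 2 * (sx1 z - x1s)
            + (G2 p 0 c - x2s * r2 p / K02 p) * (sx2 z - x2s)).
Proof.
  unfold F. cbn [sx1 sx2 su1 su2]. eapply taylor1_ext; [taylor1_model| |]; close_linearization.
Qed.

Lemma linearize_u1 : taylor1 c (fun z => su1 (F p z)) (su1 (F p c))
  (fun z => s1 p ^ 2 * (x2s * a0 p * q ^ 2 / sa p ^ 2 - r1 p * x1s / (sK1 p ^ 2 * K01 p)) * su1 z
            - s1 p ^ 2 * x2s * a0 p * q ^ 2 / sa p ^ 2 * su2 z).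
Proof.
  unfold F. cbn [sx1 sx2 su1 su2]. eapply taylor1_ext; [taylor1_model| |]; close_linearization.
Qed.

Lemma linearize_u2 : taylor1 c (fun z => su2 (F p z)) (su2 (F p c))
  (fun z => s2 p ^ 2 * e p * x1s * a0 p * q ^ 2 / sa p ^ 2 * su1 z
            - s2 p ^ 2 * (r2 p * x2s / (sK2 p ^ 2 * K02 p) + e p * x1s * a0 p * q ^ 2 / sa p ^ 2)
              * su2 z).
Proof.
  unfold F. cbn [sx1 sx2 su1 su2]. eapply taylor1_ext; [taylor1_model| |]; close_linearization.
Qed.
End Linearization.

Section JacobianSigns.
Variables (p : params) (x1s x2s : R).
Hypotheses (HK01 : 0 < K01 p) (HK02 : 0 < K02 p) (HsK1 : 0 < sK1 p) (HsK2 : 0 < sK2 p)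
  (Ha0 : 0 < a0 p) (Hsa : 0 < sa p) (Hr2 : 0 < r2 p) (Hh : 0 < h p) (He : 0 < e p)
  (Hs1 : 0 < s1 p) (Hs2 : 0 < s2 p) (Hx1 : 0 < x1s) (Hx2 : 0 <= x2s).
Local Notation c := (mkState x1s x2s 0 0).
Hypothesis Heq : equilibrium p c.
Local Notation q := (saturation p x1s).

Local Ltac row L :=
  pose proof (L p x1s x2s) as Hrow; repeat specialize (Hrow ltac:(assumption || lra));
  apply proj2 in Hrow; rewrite Heq in Hrow; revert Hrow; apply bigO_ext; intros z;
  cbn [sx1 sx2 su1 su2]; ring.

Lemma stable_of_jacobian_signs :
  G1 p 0 c + x1s * (h p * a0 p ^ 2 * x2s * q ^ 2 - r1 p / K01 p) < 0 ->
  G2 p 0 c - x2s * r2 p / K02 p < 0 ->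
  x2s * a0 p * q ^ 2 / sa p ^ 2 < r1 p * x1s / (sK1 p ^ 2 * K01 p) ->
  loc_asym_stable p c.
Proof.
  intros H11 H22 Hsel.
  assert (Hq : 0 < q) by (apply Rinv_0_lt_compat; pose proof (Rmult_lt_0_compat _ _ Hh Ha0); nra).
  assert (Hq2 : 0 < q ^ 2) by (apply pow_lt; lra).
  assert (Hsa2 : 0 < / sa p ^ 2) by (apply Rinv_0_lt_compat, pow_lt; lra).
  assert (0 < s1 p ^ 2) by (apply pow_lt; lra). assert (0 < s2 p ^ 2) by (apply pow_lt; lra).
  assert (0 <= x1s * a0 p * q * (x2s * e p * a0 p * q ^ 2))
    by (repeat apply Rmult_le_pos; lra).
  assert (0 <= s1 p ^ 2 * x2s * a0 p * q ^ 2 * / sa p ^ 2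
               * (s2 p ^ 2 * e p * x1s * a0 p * q ^ 2 * / sa p ^ 2))
    by (repeat apply Rmult_le_pos; lra).
  assert (0 < e p * x1s * a0 p * q ^ 2 * / sa p ^ 2) by (repeat apply Rmult_lt_0_compat; lra).
  assert (0 <= r2 p * x2s / (sK2 p ^ 2 * K02 p))
    by (apply Rle_mult_inv_pos; [apply Rmult_le_pos|apply Rmult_lt_0_compat; [apply pow_lt|]]; lra).
  apply (stable_of_linearization p c
    (G1 p 0 c + x1s * (h p * a0 p ^ 2 * x2s * q ^ 2 - r1 p / K01 p)) (- (x1s * a0 p * q))
    (x2s * e p * a0 p * q ^ 2) (G2 p 0 c - x2s * r2 p / K02 p)
    (s1 p ^ 2 * (x2s * a0 p * q ^ 2 / sa p ^ 2 - r1 p * x1s / (sK1 p ^ 2 * K01 p)))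
    (- (s1 p ^ 2 * x2s * a0 p * q ^ 2 / sa p ^ 2))
    (s2 p ^ 2 * e p * x1s * a0 p * q ^ 2 / sa p ^ 2)
    (- (s2 p ^ 2 * (r2 p * x2s / (sK2 p ^ 2 * K02 p) + e p * x1s * a0 p * q ^ 2 / sa p ^ 2)))).
  - apply dissipative_of_signs; lra.
  - unfold Rdiv in *. apply dissipative_of_signs; nra.
  - row linearize_x1.
  - row linearize_x2.
  - row linearize_u1.
  - row linearize_u2.
Qed.
End JacobianSigns.

(** * Trait functions and equilibria *)

Lemma exp_le_1 x : x <= 0 -> exp x <= 1.
Proof. intros H. rewrite <- exp_0. destruct H; [left; now apply exp_increasing|now subst]. Qed.

Lemma neg_sq_div_nonpos a b : 0 < b -> - a ^ 2 / b <= 0.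
Proof.
  intros Hb. unfold Rdiv. pose proof (pow2_ge_0 a). pose proof (Rinv_0_lt_compat b Hb). nra.
Qed.

Section Shapes.
Variable p : params.
Hypotheses (HK01 : 0 < K01 p) (HK02 : 0 < K02 p) (HsK1 : 0 < sK1 p) (HsK2 : 0 < sK2 p)
  (Ha0 : 0 < a0 p) (Hsa : 0 < sa p).

Lemma K1_pos v : 0 < K1 p v.
Proof. unfold K1. pose proof (exp_pos (- v ^ 2 / (2 * sK1 p ^ 2))). nra. Qed.
Lemma K2_pos v : 0 < K2 p v.
Proof. unfold K2. pose proof (exp_pos (- v ^ 2 / (2 * sK2 p ^ 2))). nra. Qed.
Lemma aa_pos u v : 0 < aa p u v.
Proof. unfold aa. pose proof (exp_pos (- (u - v) ^ 2 / (2 * sa p ^ 2))). nra. Qed.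

Lemma K1_le v : K1 p v <= K01 p.
Proof.
  unfold K1. pose proof (exp_le_1 _ (neg_sq_div_nonpos v (2 * sK1 p ^ 2)
    ltac:(pose proof (pow_lt _ 2 HsK1); lra))). nra.
Qed.
Lemma K2_le v : K2 p v <= K02 p.
Proof.
  unfold K2. pose proof (exp_le_1 _ (neg_sq_div_nonpos v (2 * sK2 p ^ 2)
    ltac:(pose proof (pow_lt _ 2 HsK2); lra))). nra.
Qed.
Lemma aa_le u v : aa p u v <= a0 p.
Proof.
  unfold aa. pose proof (exp_le_1 _ (neg_sq_div_nonpos (u - v) (2 * sa p ^ 2)
    ltac:(pose proof (pow_lt _ 2 Hsa); lra))). nra.
Qed.

Lemma K1_lt v w : v ^ 2 < w ^ 2 -> K1 p w < K1 p v.
Proof.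
  intros H. unfold K1. apply Rmult_lt_compat_l; [easy|]. apply exp_increasing.
  pose proof (pow_lt _ 2 HsK1). unfold Rdiv.
  apply Rmult_lt_compat_r; [apply Rinv_0_lt_compat|]; lra.
Qed.

Lemma inv_K1_ge v : / K01 p * (1 + v ^ 2 / (2 * sK1 p ^ 2)) <= / K1 p v.
Proof.
  unfold K1. rewrite Rinv_mult, <- exp_Ropp.
  replace (- (- v ^ 2 / (2 * sK1 p ^ 2))) with (v ^ 2 / (2 * sK1 p ^ 2)) by (unfold Rdiv; ring).
  apply Rmult_le_compat_l; [left; now apply Rinv_0_lt_compat|]. apply exp_ineq1_le.
Qed.

Lemma aa_ge v : a0 p * (1 - v ^ 2 / (2 * sa p ^ 2)) <= aa p v 0.
Proof.
  unfold aa. rewrite Rminus_0_r.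
  replace (1 - v ^ 2 / (2 * sa p ^ 2)) with (1 + - v ^ 2 / (2 * sa p ^ 2)) by (unfold Rdiv; ring).
  apply Rmult_le_compat_l; [lra|]. apply exp_ineq1_le.
Qed.
End Shapes.

Lemma saturating_le hh x y : 0 < hh -> 0 <= x <= y -> x / (1 + hh * x) <= y / (1 + hh * y).
Proof.
  intros Hh Hxy. assert (0 < 1 + hh * x) by nra. assert (0 < 1 + hh * y) by nra.
  apply (Rmult_le_reg_r ((1 + hh * x) * (1 + hh * y))); [nra|]. field_simplify; nra.
Qed.

Lemma saturating_lt hh x y : 0 < hh -> 0 <= x < y -> x / (1 + hh * x) < y / (1 + hh * y).
Proof.
  intros Hh Hxy. assert (0 < 1 + hh * x) by nra. assert (0 < 1 + hh * y) by nra.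
  apply (Rmult_lt_reg_r ((1 + hh * x) * (1 + hh * y))); [nra|]. field_simplify; nra.
Qed.

Lemma holling_le hh A X A' X' : 0 < hh -> 0 <= A <= A' -> 0 <= X <= X' ->
  A * X / (1 + hh * A * X) <= A' * X' / (1 + hh * A' * X').
Proof.
  intros Hh HA HX. rewrite !(Rmult_assoc hh). apply saturating_le; [easy|split; nra].
Qed.

Lemma holling_lt hh A X A' X' : 0 < hh -> 0 < A <= A' -> 0 <= X < X' ->
  A * X / (1 + hh * A * X) < A' * X' / (1 + hh * A' * X').
Proof.
  intros Hh HA HX. rewrite !(Rmult_assoc hh). apply saturating_lt; [easy|split; nra].
Qed.

Lemma F_x1 p s : sx1 (F p s) = sx1 s * G1 p (su1 s) s.
Proof. reflexivity. Qed.
Lemma F_x2 p s : sx2 (F p s) = sx2 s * G2 p (su2 s) s.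
Proof. reflexivity. Qed.

Lemma G1_zero_strategies p x1 x2 :
  G1 p 0 (mkState x1 x2 0 0) = r1 p * (1 - x1 / K01 p) - a0 p * x2 / (1 + h p * a0 p * x1).
Proof. unfold G1. cbn. now rewrite K1_0, aa_diag. Qed.
Lemma G2_zero_strategies p x1 x2 :
  G2 p 0 (mkState x1 x2 0 0)
  = e p * a0 p * x1 / (1 + h p * a0 p * x1) - d p + r2 p * (1 - x2 / K02 p).
Proof. unfold G2. cbn. now rewrite K2_0, aa_diag. Qed.

Lemma equilibrium_eqs p s : equilibrium p s ->
  sx1 s * G1 p (su1 s) s = 0 /\ sx2 s * G2 p (su2 s) s = 0 /\ su1 (F p s) = 0 /\ su2 (F p s) = 0.
Proof. intros H. rewrite <- F_x1, <- F_x2, H. cbn. tauto. Qed.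

Section Equilibria.
Variable p : params.
Hypotheses (HK01 : 0 < K01 p) (HK02 : 0 < K02 p) (HsK1 : 0 < sK1 p) (HsK2 : 0 < sK2 p)
  (Ha0 : 0 < a0 p) (Hsa : 0 < sa p) (Hr1 : 0 < r1 p) (Hr2 : 0 < r2 p) (Hh : 0 < h p)
  (He : 0 < e p) (Hs1 : 0 < s1 p) (Hs2 : 0 < s2 p).

Lemma holling_denom_pos u1 u2 x1 : 0 <= x1 -> 0 < 1 + h p * aa p u1 u2 * x1.
Proof. intros Hx. pose proof (Rmult_lt_0_compat _ _ Hh (aa_pos p Ha0 u1 u2)). nra. Qed.

Lemma equilibrium_no_predator x1 u1 u2 : 0 < x1 -> equilibrium p (mkState x1 0 u1 u2) ->
  x1 = K01 p /\ u1 = 0 /\ u2 = 0.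
Proof.
  intros Hx H. destruct (equilibrium_eqs p _ H) as [E1 [_ [E3 E4]]].
  unfold G1, F in *. cbn [sx1 sx2 su1 su2] in E1, E3, E4.
  pose proof (K1_pos p HK01 u1). pose proof (K2_pos p HK02 u2). pose proof (aa_pos p Ha0 u1 u2).
  pose proof (holling_denom_pos u1 u2 x1 ltac:(lra)).
  pose proof (pow_lt _ 2 Hs1). pose proof (pow_lt _ 2 Hs2). pose proof (pow_lt _ 2 HsK1).
  pose proof (pow_lt _ 2 HsK2). pose proof (pow_lt _ 2 Hsa).
  assert (X : x1 = K1 p u1).
  { assert (Hx1 : x1 * (r1 p / K1 p u1) * (K1 p u1 - x1) = 0)
      by (etransitivity; [|exact E1]; field; lra).
    apply Rmult_integral in Hx1 as [Hx1|]; [|lra].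
    apply Rmult_integral in Hx1 as [|Hx1]; [lra|].
    exfalso. revert Hx1. apply Rgt_not_eq, Rdiv_lt_0_compat; lra. }
  assert (U1 : u1 = 0).
  { assert (Hu : - (s1 p ^ 2 * r1 p * x1 / (sK1 p ^ 2 * K1 p u1)) * u1 = 0)
      by (etransitivity; [|exact E3]; field; lra).
    apply Rmult_integral in Hu as [Hu|]; [exfalso|easy].
    assert (0 < s1 p ^ 2 * r1 p * x1 / (sK1 p ^ 2 * K1 p u1))
      by (apply Rdiv_lt_0_compat; apply Rmult_lt_0_compat; auto using Rmult_lt_0_compat).
    lra. }
  subst u1. rewrite K1_0 in X. repeat split; auto.
  set (B := 1 + h p * aa p 0 u2 * x1) in *.
  assert (Hu : - (s2 p ^ 2 * e p * x1 * aa p 0 u2 / (sa p ^ 2 * B ^ 2)) * u2 = 0)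
    by (etransitivity; [|exact E4]; field; split; [lra|nra]).
  apply Rmult_integral in Hu as [Hu|]; [exfalso|easy].
  assert (0 < s2 p ^ 2 * e p * x1 * aa p 0 u2 / (sa p ^ 2 * B ^ 2))
    by (apply Rdiv_lt_0_compat; apply Rmult_lt_0_compat; auto using Rmult_lt_0_compat, pow_lt).
  lra.
Qed.

Lemma equilibrium_prey_below_capacity s : equilibrium p s -> 0 < sx1 s -> 0 < sx2 s ->
  G1 p (su1 s) s = 0 /\ G2 p (su2 s) s = 0 /\ sx1 s < K1 p (su1 s).
Proof.
  intros H Hx1 Hx2. destruct (equilibrium_eqs p _ H) as [E1 [E2 _]].
  apply Rmult_integral in E1 as [|E1]; [lra|]. apply Rmult_integral in E2 as [|E2]; [lra|].
  repeat split; auto. unfold G1 in E1.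
  pose proof (K1_pos p HK01 (su1 s)). pose proof (aa_pos p Ha0 (su1 s) (su2 s)).
  assert (0 < 1 + h p * aa p (su1 s) (su2 s) * sx1 s) by (apply holling_denom_pos; lra).
  assert (0 < aa p (su1 s) (su2 s) * sx2 s / (1 + h p * aa p (su1 s) (su2 s) * sx1 s))
    by (apply Rdiv_lt_0_compat; [apply Rmult_lt_0_compat|]; lra).
  assert (Hlt : sx1 s / K1 p (su1 s) < 1) by nra.
  apply (Rmult_lt_reg_r (/ K1 p (su1 s))); [apply Rinv_0_lt_compat; lra|].
  rewrite Rinv_r by lra. exact Hlt.
Qed.

Lemma equilibrium_no_prey x2 u1 u2 : 0 < x2 -> equilibrium p (mkState 0 x2 u1 u2) ->
  x2 = K2 p u2 * (1 - d p / r2 p).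
Proof.
  intros Hx H. destruct (equilibrium_eqs p _ H) as [_ [E2 _]].
  unfold G2 in E2. cbn [sx1 sx2 su1 su2] in E2. pose proof (K2_pos p HK02 u2).
  apply Rmult_integral in E2 as [|E2]; [lra|].
  assert (Hx2 : r2 p / K2 p u2 * (K2 p u2 * (1 - d p / r2 p) - x2) = 0)
    by (etransitivity; [|exact E2]; field; lra).
  apply Rmult_integral in Hx2 as [Hx2|]; [|lra].
  exfalso. revert Hx2. apply Rgt_not_eq, Rdiv_lt_0_compat; lra.
Qed.

Lemma ESS_no_prey_G1 s : isESS p s -> sx1 s = 0 -> r1 p <= aa p (su1 s) (su2 s) * sx2 s.
Proof.
  intros [_ [_ [_ [_ [_ Hbd]]]]] Z. destruct (Hbd ltac:(rewrite Z; ring)) as [[_ G] _].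
  pose proof (K1_pos p HK01 (su1 s)).
  replace (G1 p (su1 s) s) with (r1 p - aa p (su1 s) (su2 s) * sx2 s) in G
    by (unfold G1; rewrite Z; field; lra).
  lra.
Qed.

Lemma ESS_not_extinct s : isESS p s -> sx1 s = 0 -> 0 < sx2 s.
Proof.
  intros Hs Z. pose proof (ESS_no_prey_G1 s Hs Z). destruct Hs as [_ [Hx2 _]].
  destruct Hx2 as [|E]; [easy|]. rewrite <- E in H. lra.
Qed.

Lemma G1_mirror_gt s v : 0 < sx1 s -> v ^ 2 < su1 s ^ 2 -> (v - su2 s) ^ 2 = (su1 s - su2 s) ^ 2 ->
  G1 p (su1 s) s < G1 p v s.
Proof.
  intros Hx Hv Hd. unfold G1.
  replace (aa p v (su2 s)) with (aa p (su1 s) (su2 s)) by (unfold aa; now rewrite Hd).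
  pose proof (K1_lt p HK01 HsK1 _ _ Hv).
  pose proof (K1_pos p HK01 v). pose proof (K1_pos p HK01 (su1 s)).
  assert (/ K1 p v < / K1 p (su1 s)) by (apply Rinv_lt_contravar; nra).
  assert (0 < r1 p * sx1 s) by (apply Rmult_lt_0_compat; lra). unfold Rdiv. nra.
Qed.

Lemma interior_ESS_zero_strategies s : isESS p s -> 0 < sx1 s -> 0 < sx2 s ->
  su1 s = 0 /\ su2 s = 0.
Proof.
  intros Hs Hx1 Hx2. destruct Hs as [_ [_ [Heq [_ [Hint _]]]]].
  destruct (Hint (conj Hx1 Hx2)) as [[Gmax _] _].
  destruct (equilibrium_eqs p _ Heq) as [_ [_ [E3 E4]]]. unfold F in E3, E4.
  destruct s as [x1 x2 u1 u2]. cbn [sx1 sx2 su1 su2] in *.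
  pose proof (K1_pos p HK01 u1). pose proof (K2_pos p HK02 u2). pose proof (aa_pos p Ha0 u1 u2).
  pose proof (holling_denom_pos u1 u2 x1 ltac:(lra)).
  pose proof (pow_lt _ 2 Hs1). pose proof (pow_lt _ 2 Hs2). pose proof (pow_lt _ 2 HsK1).
  pose proof (pow_lt _ 2 HsK2). pose proof (pow_lt _ 2 Hsa).
  set (B := 1 + h p * aa p u1 u2 * x1) in *.
  assert (0 < B ^ 2) by (apply pow_lt; lra).
  set (al := r1 p * x1 / (sK1 p ^ 2 * K1 p u1)).
  set (be := x2 * aa p u1 u2 / (sa p ^ 2 * B ^ 2)).
  set (ga := r2 p * x2 / (sK2 p ^ 2 * K2 p u2)).
  set (de := e p * x1 * aa p u1 u2 / (sa p ^ 2 * B ^ 2)).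
  assert (Hal : 0 < al)
    by (apply Rdiv_lt_0_compat; apply Rmult_lt_0_compat; auto using Rmult_lt_0_compat).
  assert (Hga : 0 < ga)
    by (apply Rdiv_lt_0_compat; apply Rmult_lt_0_compat; auto using Rmult_lt_0_compat).
  assert (Hde : 0 < de)
    by (apply Rdiv_lt_0_compat; apply Rmult_lt_0_compat; auto using Rmult_lt_0_compat).
  assert (E3' : al * u1 = be * (u1 - u2)).
  { apply Rmult_integral in E3 as [|E3]; [lra|]. unfold al, be. unfold Rdiv in *. lra. }
  assert (E4' : ga * u2 = de * (u1 - u2)).
  { apply Rmult_integral in E4 as [|E4]; [lra|]. unfold ga, de. unfold Rdiv in *. lra. }
  destruct (Req_dec u1 u2) as [<-|Hne].
  - assert (Hz : al * u1 = 0) by lra. apply Rmult_integral in Hz as [|]; lra.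
  - exfalso.
    pose proof (Rsqr_pos_lt (u1 - u2) ltac:(lra)) as Hsq. unfold Rsqr in Hsq.
    assert (Hpos : 0 < u2 * (u1 - u2)).
    { assert (ga * (u2 * (u1 - u2)) = de * ((u1 - u2) * (u1 - u2)))
        by (rewrite <- Rmult_assoc, E4'; ring).
      destruct (Rlt_or_le 0 (u2 * (u1 - u2))) as [|Hle]; [easy|]. nra. }
    pose proof (G1_mirror_gt (mkState x1 x2 u1 u2) (2 * u2 - u1) Hx1 ltac:(cbn; nra)
                  ltac:(cbn; ring)).
    specialize (Gmax (2 * u2 - u1)). cbn [su1] in *. lra.
Qed.
Lemma prey_isocline_decreasing x1 x2 y1 y2 : h p * a0 p * K01 p < 1 -> 0 < x1 < y1 ->
  G1 p 0 (mkState x1 x2 0 0) = 0 -> G1 p 0 (mkState y1 y2 0 0) = 0 -> y2 < x2.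
Proof.
  rewrite !G1_zero_strategies. intros Hc Hxy Gx Gy.
  assert (0 < h p * a0 p) by (apply Rmult_lt_0_compat; lra).
  assert (Px : a0 p * x2 = r1 p * (1 - x1 / K01 p) * (1 + h p * a0 p * x1)).
  { replace (r1 p * (1 - x1 / K01 p)) with (a0 p * x2 / (1 + h p * a0 p * x1)) by lra.
    field. nra. }
  assert (Py : a0 p * y2 = r1 p * (1 - y1 / K01 p) * (1 + h p * a0 p * y1)).
  { replace (r1 p * (1 - y1 / K01 p)) with (a0 p * y2 / (1 + h p * a0 p * y1)) by lra.
    field. nra. }
  assert (Hd : a0 p * x2 - a0 p * y2
               = r1 p * (y1 - x1) / K01 p * (1 + h p * a0 p * (x1 + y1) - h p * a0 p * K01 p))
    by (rewrite Px, Py; field; lra).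
  assert (0 < r1 p * (y1 - x1) / K01 p) by (apply Rdiv_lt_0_compat; nra).
  assert (0 < h p * a0 p * (x1 + y1)) by nra.
  nra.
Qed.

Lemma predator_isocline_increasing x1 x2 y1 y2 : 0 <= x1 < y1 ->
  G2 p 0 (mkState x1 x2 0 0) = 0 -> G2 p 0 (mkState y1 y2 0 0) = 0 -> x2 < y2.
Proof.
  rewrite !G2_zero_strategies. intros Hxy Gx Gy.
  pose proof (holling_lt (h p) (a0 p) x1 (a0 p) y1 Hh ltac:(lra) Hxy).
  assert (r2 p * x2 / K02 p < r2 p * y2 / K02 p).
  { unfold Rdiv in *. replace (e p * a0 p * x1) with (e p * (a0 p * x1)) in Gx by ring.
    replace (e p * a0 p * y1) with (e p * (a0 p * y1)) in Gy by ring. nra. }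
  unfold Rdiv in H0. apply Rmult_lt_reg_r in H0; [|now apply Rinv_0_lt_compat]. nra.
Qed.

Lemma coexistence_unique x1 x2 y1 y2 : h p * a0 p * K01 p < 1 -> 0 < x1 -> 0 < y1 ->
  G1 p 0 (mkState x1 x2 0 0) = 0 -> G2 p 0 (mkState x1 x2 0 0) = 0 ->
  G1 p 0 (mkState y1 y2 0 0) = 0 -> G2 p 0 (mkState y1 y2 0 0) = 0 ->
  x1 = y1 /\ x2 = y2.
Proof.
  intros Hc Hx Hy G1x G2x G1y G2y.
  destruct (Rtotal_order x1 y1) as [Hlt|[<-|Hgt]].
  - pose proof (prey_isocline_decreasing x1 x2 y1 y2 Hc (conj Hx Hlt) G1x G1y).
    pose proof (predator_isocline_increasing x1 x2 y1 y2 ltac:(lra) G2x G2y). lra.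
  - split; [easy|]. rewrite G1_zero_strategies in G1x, G1y.
    assert (0 < 1 + h p * a0 p * x1) by (pose proof (Rmult_lt_0_compat _ _ Hh Ha0); nra).
    assert (a0 p * x2 / (1 + h p * a0 p * x1) = a0 p * y2 / (1 + h p * a0 p * x1)) by lra.
    unfold Rdiv in H0. apply Rmult_eq_reg_r in H0; [|apply Rinv_neq_0_compat; lra].
    apply Rmult_eq_reg_l in H0; lra.
  - pose proof (prey_isocline_decreasing y1 y2 x1 x2 Hc (conj Hy Hgt) G1y G1x).
    pose proof (predator_isocline_increasing y1 y2 x1 x2 ltac:(lra) G2y G2x). lra.
Qed.
End Equilibria.

(** * The prey-only and the coexistence scenarios *)

Lemma holling_gap hh A a x y : 0 < hh -> 0 < A <= a -> 0 < x -> 0 < y ->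
  a * y / (1 + hh * a * x) - A * y / (1 + hh * A * x) <= y * (a - A).
Proof.
  intros Hh HA Hx Hy.
  assert (1 <= 1 + hh * a * x)
    by (pose proof (Rmult_lt_0_compat _ _ (Rmult_lt_0_compat hh a Hh ltac:(lra)) Hx); lra).
  assert (1 <= 1 + hh * A * x)
    by (pose proof (Rmult_lt_0_compat _ _ (Rmult_lt_0_compat hh A Hh ltac:(lra)) Hx); lra).
  replace (a * y / (1 + hh * a * x) - A * y / (1 + hh * A * x))
    with (y * (a - A) / ((1 + hh * a * x) * (1 + hh * A * x))) by (field; lra).
  assert (1 <= (1 + hh * a * x) * (1 + hh * A * x)) by nra.
  assert (0 <= y * (a - A)) by nra.
  apply (Rmult_le_reg_r ((1 + hh * a * x) * (1 + hh * A * x))); [lra|].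
  unfold Rdiv. rewrite Rmult_assoc, Rinv_l by lra. nra.
Qed.

(* [exp t >= 1 + t] bounds [1 / K1 v] below and [a(v, 0)] below by quadratics in [v]; the
   curvature condition says the resource loss dominates the predation relief. *)
Lemma G1_le_at_zero_strategies p x1s x2s v
  (HK01 : 0 < K01 p) (HsK1 : 0 < sK1 p) (Ha0 : 0 < a0 p) (Hsa : 0 < sa p)
  (Hr1 : 0 < r1 p) (Hh : 0 < h p) (Hx1 : 0 < x1s) (Hx2 : 0 < x2s) :
  x2s * a0 p / sa p ^ 2 < r1 p * x1s / (sK1 p ^ 2 * K01 p) ->
  G1 p v (mkState x1s x2s 0 0) <= G1 p 0 (mkState x1s x2s 0 0).
Proof.
  intros Hkey. rewrite G1_zero_strategies. unfold G1. cbn [sx1 sx2 su1 su2].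
  pose proof (inv_K1_ge p HK01 v) as IK. pose proof (aa_ge p Ha0 v) as IA.
  pose proof (aa_pos p Ha0 v 0). pose proof (aa_le p Ha0 Hsa v 0).
  pose proof (holling_gap (h p) (aa p v 0) (a0 p) x1s x2s Hh ltac:(lra) Hx1 Hx2) as Gap.
  set (A := aa p v 0) in *. set (w := v ^ 2) in *.
  assert (Hw : 0 <= w) by apply pow2_ge_0.
  pose proof (pow_lt _ 2 HsK1). pose proof (pow_lt _ 2 Hsa).
  assert (T1 : r1 p * x1s / K01 p + w / 2 * (r1 p * x1s / (sK1 p ^ 2 * K01 p))
               <= r1 p * x1s / K1 p v).
  { unfold Rdiv in *.
    replace (r1 p * x1s * / K01 p + w * / 2 * (r1 p * x1s * / (sK1 p ^ 2 * K01 p)))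
      with (r1 p * x1s * (/ K01 p * (1 + w * / (2 * sK1 p ^ 2)))) by (field; lra).
    apply Rmult_le_compat_l; [nra|exact IK]. }
  assert (T2 : x2s * (a0 p - A) <= w / 2 * (x2s * a0 p / sa p ^ 2)).
  { replace (w / 2 * (x2s * a0 p / sa p ^ 2)) with (x2s * (a0 p - a0 p * (1 - w / (2 * sa p ^ 2))))
      by (field; lra).
    apply Rmult_le_compat_l; lra. }
  assert (T3 : w / 2 * (x2s * a0 p / sa p ^ 2) <= w / 2 * (r1 p * x1s / (sK1 p ^ 2 * K01 p)))
    by (apply Rmult_le_compat_l; lra).
  unfold Rdiv in *. lra.
Qed.

Lemma selection_bound p x1s x2s
  (HK01 : 0 < K01 p) (HK02 : 0 < K02 p) (HsK1 : 0 < sK1 p) (HsK2 : 0 < sK2 p)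
  (Ha0 : 0 < a0 p) (Hsa : 0 < sa p) (Hr1 : 0 < r1 p) (Hr2 : 0 < r2 p) (He : 0 < e p)
  (Hx1 : 0 < x1s) (Hx2 : 0 < x2s) :
  sK2 p / sK1 p * sqrt (r1 p * e p * K02 p / (r2 p * K01 p)) > x2s / x1s ->
  sa p ^ 2 / (sK1 p * sK2 p) > sqrt (e p * K01 p * K02 p / (r1 p * r2 p)) * a0 p ->
  x2s * a0 p / sa p ^ 2 < r1 p * x1s / (sK1 p ^ 2 * K01 p).
Proof.
  intros Hratio Hsigma. set (S := sqrt (e p * K01 p * K02 p / (r1 p * r2 p))) in *.
  assert (HS : sqrt (r1 p * e p * K02 p / (r2 p * K01 p)) = S * (r1 p / K01 p)).
  { unfold S. rewrite <- (sqrt_pow2 (r1 p / K01 p)) by (apply Rlt_le, Rdiv_lt_0_compat; lra).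
    rewrite <- sqrt_mult_alt.
    - f_equal. field. lra.
    - apply Rlt_le, Rdiv_lt_0_compat; repeat apply Rmult_lt_0_compat; lra. }
  rewrite HS in Hratio.
  set (c := x1s * sK2 p * r1 p / (sK1 p * K01 p * sa p ^ 2)).
  assert (Hc : 0 < c) by (apply Rdiv_lt_0_compat; repeat apply Rmult_lt_0_compat;
                          try apply pow_lt; lra).
  apply (Rmult_lt_compat_r c) in Hsigma; [|exact Hc].
  apply (Rmult_lt_compat_r (x1s * a0 p / sa p ^ 2)) in Hratio;
    [|apply Rdiv_lt_0_compat; [nra|apply pow_lt; lra]].
  replace (x2s / x1s * (x1s * a0 p / sa p ^ 2)) with (x2s * a0 p / sa p ^ 2) in Hratio
    by (field; lra).
  replace (sK2 p / sK1 p * (S * (r1 p / K01 p)) * (x1s * a0 p / sa p ^ 2))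
    with (S * a0 p * c) in Hratio by (unfold c;  field; lra).
  replace (sa p ^ 2 / (sK1 p * sK2 p) * c) with (r1 p * x1s / (sK1 p ^ 2 * K01 p)) in Hsigma
    by (unfold c; field; lra).
  lra.
Qed.

Lemma equilibrium_prey_only p : 0 < K01 p -> equilibrium p (mkState (K01 p) 0 0 0).
Proof.
  intros HK. unfold equilibrium, F. cbn [sx1 sx2 su1 su2]. rewrite K1_0.
  f_equal; unfold Rdiv; rewrite ?Rinv_r by lra; ring.
Qed.

Section PreyOnly.
Variable p : params.
Hypotheses (HK01 : 0 < K01 p) (HK02 : 0 < K02 p) (HsK1 : 0 < sK1 p) (HsK2 : 0 < sK2 p)
  (Ha0 : 0 < a0 p) (Hsa : 0 < sa p) (Hr1 : 0 < r1 p) (Hr2 : 0 < r2 p) (Hh : 0 < h p)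
  (He : 0 < e p) (Hs1 : 0 < s1 p) (Hs2 : 0 < s2 p).
Hypothesis Hi : r2 p + e p * a0 p * K01 p / (1 + a0 p * h p * K01 p) < d p.
Local Notation c := (mkState (K01 p) 0 0 0).

Lemma G2_prey_only_neg : G2 p 0 c < 0.
Proof.
  rewrite G2_zero_strategies. replace (1 + a0 p * h p * K01 p) with (1 + h p * a0 p * K01 p) in Hi
    by ring.
  unfold Rdiv in *. lra.
Qed.

Lemma prey_only_stable : loc_asym_stable p c.
Proof.
  pose proof G2_prey_only_neg.
  apply stable_of_jacobian_signs; auto; try lra.
  - apply equilibrium_prey_only, HK01.
  - rewrite G1_zero_strategies.
    replace (r1 p * (1 - K01 p / K01 p) - a0 p * 0 / (1 + h p * a0 p * K01 p)
      + K01 p * (h p * a0 p ^ 2 * 0 * saturation p (K01 p) ^ 2 - r1 p / K01 p)) with (- r1 p)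
      by (field; pose proof (Rmult_lt_0_compat _ _ (Rmult_lt_0_compat _ _ Hh Ha0) HK01); lra).
    lra.
  - unfold Rdiv. rewrite !Rmult_0_l.
    apply Rmult_lt_0_compat; [nra|].
    apply Rinv_0_lt_compat, Rmult_lt_0_compat; [apply pow_lt|]; lra.
Qed.
Lemma prey_only_ESS : isESS p c.
Proof.
  pose proof G2_prey_only_neg as G2neg.
  unfold isESS. cbn [sx1 sx2 su1 su2].
  split; [lra|]. split; [lra|]. split; [now apply equilibrium_prey_only|].
  split; [exact prey_only_stable|]. split; [intros [_ H]; lra|]. intros _.
  split; split.
  - intros v. rewrite G1_zero_strategies. unfold G1. cbn [sx1 sx2 su1 su2].
    pose proof (K1_pos p HK01 v). pose proof (K1_le p HK01 HsK1 v).
    assert (1 <= K01 p / K1 p v)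
      by (apply (Rmult_le_reg_r (K1 p v)); [lra|]; unfold Rdiv; rewrite Rmult_assoc, Rinv_l; lra).
    unfold Rdiv in *. rewrite Rinv_r by lra. nra.
  - rewrite G1_zero_strategies. unfold Rdiv. rewrite Rinv_r by lra. lra.
  - intros v. rewrite G2_zero_strategies. unfold G2. cbn [sx1 sx2 su1 su2].
    pose proof (aa_pos p Ha0 0 v). pose proof (aa_le p Ha0 Hsa 0 v).
    pose proof (holling_le (h p) (aa p 0 v) (K01 p) (a0 p) (K01 p) Hh ltac:(lra) ltac:(lra)).
    unfold Rdiv in *. nra.
  - lra.
Qed.

Lemma prey_only_ESS_unique s : isESS p s -> s = c.
Proof.
  intros Hs. destruct s as [x1 x2 u1 u2].
  pose proof Hs as [Hx1 [Hx2 [Heq _]]]. cbn [sx1 sx2] in Hx1, Hx2.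
  pose proof G2_prey_only_neg as G2neg. rewrite G2_zero_strategies in G2neg.
  assert (0 <= e p * a0 p * K01 p / (1 + h p * a0 p * K01 p)).
  { apply Rlt_le, Rdiv_lt_0_compat; [repeat apply Rmult_lt_0_compat; lra|].
    pose proof (Rmult_lt_0_compat _ _ (Rmult_lt_0_compat _ _ Hh Ha0) HK01). lra. }
  destruct Hx1 as [Hx1|<-]; [destruct Hx2 as [Hx2|<-]|].
  - exfalso.
    assert (G2 p u2 (mkState x1 x2 u1 u2) = 0 /\ x1 < K1 p u1) as [E2 Hcap]
      by (apply (equilibrium_prey_below_capacity p) in Heq; cbn in Heq; tauto).
    unfold G2 in E2. cbn [sx1 sx2 su1 su2] in E2.
    pose proof (K1_le p HK01 HsK1 u1). pose proof (K2_pos p HK02 u2).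
    pose proof (aa_pos p Ha0 u1 u2). pose proof (aa_le p Ha0 Hsa u1 u2).
    pose proof (holling_le (h p) (aa p u1 u2) x1 (a0 p) (K01 p) Hh ltac:(lra) ltac:(lra)).
    assert (0 < x2 / K2 p u2) by (apply Rdiv_lt_0_compat; lra).
    unfold Rdiv in *. nra.
  - assert (x1 = K01 p /\ u1 = 0 /\ u2 = 0) as [-> [-> ->]]
      by (apply equilibrium_no_predator; auto).
    reflexivity.
  - exfalso. assert (Hx2' : 0 < x2) by (apply (ESS_not_extinct p) in Hs; auto).
    assert (Hx2e : x2 = K2 p u2 * (1 - d p / r2 p)) by (apply equilibrium_no_prey with u1; auto).
    assert (Hdr : 1 < d p / r2 p).
    { apply (Rmult_lt_reg_r (r2 p)); [lra|]. unfold Rdiv in *. rewrite Rmult_assoc, Rinv_l; lra. }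
    pose proof (K2_pos p HK02 u2). nra.
Qed.
End PreyOnly.

Section Coexistence.
Variables (p : params) (x1s x2s : R).
Hypotheses (HK01 : 0 < K01 p) (HK02 : 0 < K02 p) (HsK1 : 0 < sK1 p) (HsK2 : 0 < sK2 p)
  (Ha0 : 0 < a0 p) (Hsa : 0 < sa p) (Hr1 : 0 < r1 p) (Hr2 : 0 < r2 p) (Hh : 0 < h p)
  (He : 0 < e p) (Hs1 : 0 < s1 p) (Hs2 : 0 < s2 p) (Hx1 : 0 < x1s) (Hx2 : 0 < x2s).
Local Notation c := (mkState x1s x2s 0 0).
Hypothesis Heq : equilibrium p c.
Hypotheses (Hpred : K02 p * a0 p < r1 p / (1 - d p / r2 p)) (Hhandle : K01 p * a0 p < 1 / h p)
  (Hratio : sK2 p / sK1 p * sqrt (r1 p * e p * K02 p / (r2 p * K01 p)) > x2s / x1s)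
  (Hsigma : sa p ^ 2 / (sK1 p * sK2 p) > sqrt (e p * K01 p * K02 p / (r1 p * r2 p)) * a0 p).

Lemma coexistence_G : G1 p 0 c = 0 /\ G2 p 0 c = 0.
Proof. pose proof Heq as H. apply (equilibrium_prey_below_capacity p) in H; auto; tauto. Qed.

Lemma predator_viable : 0 < 1 - d p / r2 p.
Proof.
  destruct (Rlt_or_le 0 (1 - d p / r2 p)) as [|Hle]; [easy|exfalso].
  assert (r1 p / (1 - d p / r2 p) <= 0).
  { destruct Hle as [Hlt|E]; [|rewrite E; unfold Rdiv; rewrite Rinv_0; lra].
    unfold Rdiv. pose proof (Rinv_lt_0_compat _ Hlt). nra. }
  pose proof (Rmult_lt_0_compat _ _ HK02 Ha0). lra.
Qed.

Lemma coexistence_prey_below_capacity : x1s < K01 p.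
Proof.
  pose proof Heq as H. apply (equilibrium_prey_below_capacity p) in H; auto.
  cbn [sx1 su1] in H. rewrite K1_0 in H. tauto.
Qed.

Lemma coexistence_stable : loc_asym_stable p c.
Proof.
  destruct coexistence_G as [G1c G2c].
  set (q := saturation p x1s).
  assert (HB : 0 < 1 + h p * a0 p * x1s)
    by (pose proof (Rmult_lt_0_compat _ _ (Rmult_lt_0_compat _ _ Hh Ha0) Hx1); lra).
  assert (Hq : 0 < q <= 1).
  { assert (0 < q) by now apply Rinv_0_lt_compat.
    assert (q * (1 + h p * a0 p * x1s) = 1) by (unfold q, saturation; field; lra).
    pose proof (Rmult_lt_0_compat _ _ (Rmult_lt_0_compat _ _ Hh Ha0) Hx1). nra. }
  apply stable_of_jacobian_signs; auto; try lra; rewrite ?G1c, ?G2c; fold q.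
  - rewrite G1_zero_strategies in G1c.
    assert (Hpre : a0 p * x2s * q = r1 p * (1 - x1s / K01 p))
      by (unfold q, saturation, Rdiv in *; lra).
    assert (Hc : h p * a0 p * K01 p < 1).
    { apply (Rmult_lt_compat_l (h p)) in Hhandle; [|easy].
      replace (h p * (1 / h p)) with 1 in Hhandle by (field; lra). lra. }
    assert (Hlt : h p * a0 p * (K01 p - x1s) * q < 1).
    { pose proof (Rmult_lt_0_compat _ _ (Rmult_lt_0_compat _ _ Hh Ha0) Hx1).
      assert (Hd : h p * a0 p * (K01 p - x1s) < 1 + h p * a0 p * x1s) by lra.
      apply (Rmult_lt_compat_r q) in Hd; [|lra].
      replace ((1 + h p * a0 p * x1s) * q) with 1 in Hd by (unfold q, saturation; field; lra).
      exact Hd. }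
    replace (0 + x1s * (h p * a0 p ^ 2 * x2s * q ^ 2 - r1 p / K01 p))
      with (x1s * (r1 p / K01 p) * (h p * a0 p * (K01 p - x1s) * q - 1))
      by (replace (h p * a0 p ^ 2 * x2s * q ^ 2) with (h p * a0 p * q * (a0 p * x2s * q)) by ring;
          rewrite Hpre; field; lra).
    assert (0 < x1s * (r1 p / K01 p)) by (apply Rmult_lt_0_compat; [|apply Rdiv_lt_0_compat]; lra).
    assert (0 < x1s * (r1 p / K01 p) * (1 - h p * a0 p * (K01 p - x1s) * q))
      by (apply Rmult_lt_0_compat; lra).
    lra.
  - assert (0 < x2s * r2 p / K02 p) by (apply Rdiv_lt_0_compat; [nra|lra]). lra.
  - pose proof (selection_bound p x1s x2s HK01 HK02 HsK1 HsK2 Ha0 Hsa Hr1 Hr2 He Hx1 Hx2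
                  Hratio Hsigma) as Hsel.
    assert (0 < x2s * a0 p / sa p ^ 2) by (apply Rdiv_lt_0_compat; [nra|apply pow_lt; lra]).
    replace (x2s * a0 p * q ^ 2 / sa p ^ 2) with (x2s * a0 p / sa p ^ 2 * q ^ 2) by (field; lra).
    assert (q ^ 2 <= 1) by nra. nra.
Qed.
Lemma coexistence_ESS : isESS p c.
Proof.
  destruct coexistence_G as [G1c G2c].
  unfold isESS. cbn [sx1 sx2 su1 su2].
  split; [lra|]. split; [lra|]. split; [exact Heq|]. split; [exact coexistence_stable|].
  split; [|intros E; nra]. intros _. split; split; auto.
  - intros v. apply G1_le_at_zero_strategies; auto.
    exact (selection_bound p x1s x2s HK01 HK02 HsK1 HsK2 Ha0 Hsa Hr1 Hr2 He Hx1 Hx2 Hratio Hsigma).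
  - intros v. rewrite G2_zero_strategies. unfold G2. cbn [sx1 sx2 su1 su2].
    pose proof (aa_pos p Ha0 0 v). pose proof (aa_le p Ha0 Hsa 0 v).
    pose proof (holling_le (h p) (aa p 0 v) x1s (a0 p) x1s Hh ltac:(lra) ltac:(lra)).
    pose proof (K2_pos p HK02 v). pose proof (K2_le p HK02 HsK2 v).
    assert (x2s / K02 p <= x2s / K2 p v)
      by (unfold Rdiv; apply Rmult_le_compat_l; [lra|apply Rinv_le_contravar; lra]).
    unfold Rdiv in *. nra.
Qed.

Lemma coexistence_ESS_unique s : isESS p s -> s = c.
Proof.
  intros Hs. destruct coexistence_G as [G1c G2c].
  destruct s as [x1 x2 u1 u2]. pose proof Hs as [Hx1' [Hx2' [Heq' [_ [Hint Hbd]]]]].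
  cbn [sx1 sx2 su1 su2] in *.
  destruct Hx1' as [Hx1'|<-].
  - destruct Hx2' as [Hx2'|<-].
    + assert (su1 (mkState x1 x2 u1 u2) = 0 /\ su2 (mkState x1 x2 u1 u2) = 0) as [U1 U2]
        by (apply (interior_ESS_zero_strategies p); auto).
      cbn [su1 su2] in U1, U2. subst u1 u2.
      destruct (equilibrium_eqs p _ Heq') as [E1 [E2 _]]. cbn [sx1 sx2 su1 su2] in E1, E2.
      apply Rmult_integral in E1 as [|E1]; [lra|]. apply Rmult_integral in E2 as [|E2]; [lra|].
      assert (Hc : h p * a0 p * K01 p < 1).
      { apply (Rmult_lt_compat_l (h p)) in Hhandle; [|easy].
        replace (h p * (1 / h p)) with 1 in Hhandle by (field; lra). lra. }
      assert (x1 = x1s /\ x2 = x2s) as [-> ->] by (apply (coexistence_unique p); auto).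
      reflexivity.
    + exfalso. assert (x1 = K01 p /\ u1 = 0 /\ u2 = 0) as [-> [-> ->]]
        by (apply equilibrium_no_predator; auto).
      destruct (Hbd ltac:(ring)) as [_ [_ G2b]]. rewrite G2_zero_strategies in G2b, G2c.
      pose proof coexistence_prey_below_capacity.
      pose proof (holling_lt (h p) (a0 p) x1s (a0 p) (K01 p) Hh ltac:(lra) ltac:(lra)).
      assert (0 < x2s / K02 p) by (apply Rdiv_lt_0_compat; lra).
      unfold Rdiv in *. nra.
  - exfalso. assert (Hpos : 0 < sx2 (mkState 0 x2 u1 u2)) by (apply (ESS_not_extinct p); auto).
    assert (Hr : r1 p <= aa p u1 u2 * x2)
      by (apply (ESS_no_prey_G1 p) with (s := mkState 0 x2 u1 u2); auto).
    cbn [sx2] in Hpos.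
    assert (Hx2e : x2 = K2 p u2 * (1 - d p / r2 p)) by (apply equilibrium_no_prey with u1; auto).
    pose proof predator_viable. pose proof (K2_le p HK02 HsK2 u2).
    pose proof (aa_le p Ha0 Hsa u1 u2).
    pose proof (aa_pos p Ha0 u1 u2). set (t := 1 - d p / r2 p) in *.
    assert (K02 p * a0 p * t < r1 p).
    { apply (Rmult_lt_compat_r t) in Hpred; [|easy].
      replace (r1 p / t * t) with (r1 p) in Hpred by (field; lra). exact Hpred. }
    assert (x2 <= K02 p * t) by (rewrite Hx2e; apply Rmult_le_compat_r; lra).
    assert (aa p u1 u2 * x2 <= a0 p * (K02 p * t)) by (apply Rmult_le_compat; lra).
    lra.
Qed.
End Coexistence.

Theorem theorem7 (p : params)
  (HK01 : 0 < K01 p) (HK02 : 0 < K02 p) (HsK1 : 0 < sK1 p) (HsK2 : 0 < sK2 p)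
  (Ha0 : 0 < a0 p) (Hsa : 0 < sa p)
  (Hr1 : 0 < r1 p) (Hr2 : 0 < r2 p) (Hh : 0 < h p) (He : 0 < e p)
  (Hs1 : 0 < s1 p) (Hs2 : 0 < s2 p) (Hd : 0 <= d p) :
  (* (i) *)
  (r2 p + e p * a0 p * K01 p / (1 + a0 p * h p * K01 p) < d p ->
     unique_ESS p (mkState (K01 p) 0 0 0)) /\
  (* (ii) *)
  (sK2 p > sK1 p ->
   forall x1s x2s : R, 0 < x1s -> 0 < x2s ->
     equilibrium p (mkState x1s x2s 0 0) ->
     K02 p * a0 p < r1 p / (1 - d p / r2 p) ->
     K01 p * a0 p < 1 / h p ->
     Rmin (2 * r2 p / K02 p) (r1 p / (sK1 p ^ 2 * K01 p)) > a0 p ->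
     r1 p * r2 p / (K01 p * K02 p) + e p * a0 p ^ 2 / (1 + a0 p * h p * K01 p) ^ 3
       > a0 p ^ 2 * h p * K02 p * (r2 p + e p / h p) ->
     sK2 p / sK1 p * sqrt (r1 p * e p * K02 p / (r2 p * K01 p)) > x2s / x1s ->
     sa p ^ 2 / (sK1 p * sK2 p) > sqrt (e p * K01 p * K02 p / (r1 p * r2 p)) * a0 p ->
     unique_ESS p (mkState x1s x2s 0 0)).
Proof.
  split.
  - intros Hi. split; [apply prey_only_ESS|intros s Hs; apply prey_only_ESS_unique]; auto.
  - intros _ x1s x2s Hx1 Hx2 Heq Hpred Hhandle _ _ Hratio Hsigma.
    split; [apply coexistence_ESS|intros s Hs; apply (coexistence_ESS_unique p)]; auto.
Qed.
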